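(* Let $n\ge1$ and $m$ be integers, $\beta>0$, $0<\gamma\le 1$. Let $(s,z)$ be the Nielsen–Olesen vortex profile (see context) and set $$x=(\gamma-1)z-\frac{2\gamma n+m}{2r},\qquad y=\gamma z-\frac{2\gamma n+m}{2r}.$$ Suppose real functions $u,v$ on $(0,\infty)$, not both identically zero, satisfy either the equations \begin{align*} &v''+\tfrac{v'}{r}-\tfrac{v}{r^2}+2\big(2y'u+yu'+\tfrac{1}{r}yu\big)-4vu^2-\gamma v s^2=0,\\ &v'y-vy'+\big(2y^2+\tfrac{\gamma}{2}s^2+2v^2\big)u=0, \end{align*} or these same equations linearized in $(u,v)$ (i.e. with the terms $-4vu^2$ and $2v^2u$ omitted), together with the finite-energy boundary conditions $u=u_0r^k(1+o(1))$, $v=v_0r^k(1+o(1))$ as $r\to0$ for some $k>-\tfrac12$, and exponential decay of $u,v$ (like $e^{-\sqrt\gamma\, r}$ up to powers of $r$) as $r\to\infty$. Then $-2n<m<0$.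
   Context: The Nielsen–Olesen vortex profile $(s,z)$ with winding number $n$ consists of real functions on $(0,\infty)$ solving $s''+\frac{s'}{r}-[z^2+\frac{\beta}{2}(s^2-1)]s=0$ and $z''+\frac{z'}{r}-\frac{z}{r^2}-zs^2=0$, with $s=s_0r^n(1+o(1))$, $z=\frac nr+z_0r+o(r)$ as $r\to0$ and $s\to1$, $z\to0$ exponentially as $r\to\infty$. The given $x,y$ are the values of the auxiliary gauge fields for this embedded ($Z_{NO}$) vortex with vanishing electromagnetic potential; $u,v$ are the radial and azimuthal profiles of a $W$ field $\propto[u\,\mathbf e_r+iv\,\mathbf e_\varphi]e^{im\varphi}$ in the gauge where the Higgs doublet has vanishing upper component. $\beta=(M_H/M_Z)^2$, $\gamma=\cos^2\theta_{\rm w}$. *)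

From Stdlib Require Import Reals.
From Coquelicot Require Import Coquelicot.
Open Scope R_scope.

Definition C2_pos (f : R -> R) : Prop :=
  forall r, 0 < r -> ex_derive f r /\ ex_derive (Derive f) r.

Definition C1_pos (f : R -> R) : Prop :=
  forall r, 0 < r -> ex_derive f r.

Definition asym0_pow (f : R -> R) (c k : R) : Prop :=
  exists eps : R -> R,
    filterlim eps (at_right 0) (locally 0) /\
    at_right 0 (fun r => f r = c * Rpower r k * (1 + eps r)).

Definition asym0_nat (f : R -> R) (c : R) (n : nat) : Prop :=
  exists eps : R -> R,
    filterlim eps (at_right 0) (locally 0) /\
    at_right 0 (fun r => f r = c * r ^ n * (1 + eps r)).

Definition exp_to (f : R -> R) (L : R) : Prop :=
  exists C a R0 : R, 0 < a /\
    forall r, R0 <= r -> Rabs (f r - L) <= C * exp (- a * r).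

Definition NO_profile (n : nat) (beta : R) (s z : R -> R) : Prop :=
  C2_pos s /\ C2_pos z /\
  (forall r, 0 < r ->
     Derive (Derive s) r + Derive s r / r
     - (z r ^ 2 + beta / 2 * (s r ^ 2 - 1)) * s r = 0) /\
  (forall r, 0 < r ->
     Derive (Derive z) r + Derive z r / r - z r / r ^ 2 - z r * s r ^ 2 = 0) /\
  (exists s0, asym0_nat s s0 n) /\
  (exists z0 : R, exists eps : R -> R,
     filterlim eps (at_right 0) (locally 0) /\
     at_right 0 (fun r => z r = INR n / r + z0 * r + eps r * r)) /\
  exp_to s 1 /\ exp_to z 0.

Definition aux_x (gamma : R) (n : nat) (m : Z) (z : R -> R) (r : R) : R :=
  (gamma - 1) * z r - (2 * gamma * INR n + IZR m) / (2 * r).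
Definition aux_y (gamma : R) (n : nat) (m : Z) (z : R -> R) (r : R) : R :=
  gamma * z r - (2 * gamma * INR n + IZR m) / (2 * r).

(* The W-field equations; c = 1 : full nonlinear equations,
   c = 0 : equations linearized in (u,v) (cubic terms dropped). *)
Definition W_eqs (c gamma : R) (y s u v : R -> R) : Prop :=
  forall r, 0 < r ->
    Derive (Derive v) r + Derive v r / r - v r / r ^ 2
      + 2 * (2 * Derive y r * u r + y r * Derive u r + / r * y r * u r)
      - c * (4 * v r * u r ^ 2) - gamma * v r * s r ^ 2 = 0 /\
    Derive v r * y r - v r * Derive y r
      + (2 * y r ^ 2 + gamma / 2 * s r ^ 2 + c * (2 * v r ^ 2)) * u r = 0.

Definition decays_W (gamma : R) (f : R -> R) : Prop :=
  exists C p R0 : R, 0 < R0 /\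
    forall r, R0 <= r -> Rabs (f r) <= C * Rpower r p * exp (- sqrt gamma * r).

(* Write [a = r z] ([rz z] below).  The profile equation becomes [a'' - a'/r = a s^2], so the
   maximum principle gives [0 < a < n], with [n - a >= c0 r^2] near [0] and [a >= c0 e^(-3r/2)]
   near infinity.  As [r y = gamma a - (2 gamma n + m)/2] and
   [r x = r (y - z) = (gamma - 1) a - (2 gamma n + m)/2], when [m >= 0] or [m <= -2n] the field [y]
   never vanishes and [x y >= 0].  For a solution [(u, v)] the flux
   [F = - r u v (gamma s^2 / 2 + 2 c v^2) / y] then has [F' = (sum of squares) / y^2
   + gamma r s^2 v^2 x y / y^2 >= 0], and the boundary conditions make [F] vanish at both ends
   (in the single case where the bound at [0] is too weak, [F'] is not even integrable there).
   So [F' = 0]: this forces [u = 0], then [v' y - v y' = 0] makes [v] a multiple of [y], and the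
   behaviour of [y] at [0] or at infinity kills the multiple. *)

From Stdlib Require Import Reals Lra Lia Psatz ZArith.
From Coquelicot Require Import Coquelicot.
Open Scope R_scope.

(** * Calculus on the real line *)

(* [auto_derive] leaves eta-expanded terms such as [fun x => Derive z x] in its side goals. *)
Ltac eta_fix :=
  repeat match goal with |- context [fun x : R => ?f x] => change (fun x : R => f x) with f end.

(* Coquelicot's [is_derive_mult] and friends are phrased with the ring operations [mult] and
   [plus] of [R_AbsRing]; these restatements use [Rmult] and [Rplus], so [apply] works on them. *)
Lemma is_derive_mult_R (f g : R -> R) (t df dg : R) : is_derive f t df -> is_derive g t dg ->
  is_derive (fun t => f t * g t) t (df * g t + f t * dg).
Proof.
  intros H1 H2. apply is_derive_Reals.
  apply derivable_pt_lim_mult; apply is_derive_Reals; assumption.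
Qed.

Lemma is_derive_plus_R (f g : R -> R) (t df dg : R) : is_derive f t df -> is_derive g t dg ->
  is_derive (fun t => f t + g t) t (df + dg).
Proof.
  intros H1 H2. apply is_derive_Reals.
  apply derivable_pt_lim_plus; apply is_derive_Reals; assumption.
Qed.

Lemma is_derive_minus_R (f g : R -> R) (t df dg : R) : is_derive f t df -> is_derive g t dg ->
  is_derive (fun t => f t - g t) t (df - dg).
Proof.
  intros H1 H2. apply is_derive_Reals.
  apply derivable_pt_lim_minus; apply is_derive_Reals; assumption.
Qed.

Lemma is_derive_ext_eq (f g : R -> R) (t l l' : R) :
  (forall x, f x = g x) -> l = l' -> is_derive f t l -> is_derive g t l'.
Proof. intros H -> H1. apply (is_derive_ext f g); auto. Qed.


Lemma is_derive_affine (f : R -> R) t l A B :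
  is_derive f t l -> is_derive (fun t => A * f t + B) t (A * l).
Proof.
  intros H. apply (is_derive_ext_eq (fun t => A * f t + B) _ t (A * l + 0)); [reflexivity | ring |].
  apply (is_derive_plus_R (fun t => A * f t) (fun _ => B)).
  - apply is_derive_scal, H.
  - apply (is_derive_const B t).
Qed.
Lemma is_derive_ext_ball (f g : R -> R) (t l l' d : R) : 0 < d ->
  (forall x, Rabs (x - t) < d -> f x = g x) -> l = l' -> is_derive f t l -> is_derive g t l'.
Proof.
  intros Hd H -> H1. apply (is_derive_ext_loc f g); auto.
  exists (mkposreal d Hd). intros y Hy. apply H. exact Hy.
Qed.

Lemma is_derive_locally_const (f : R -> R) (t c d : R) : 0 < d ->
  (forall x, Rabs (x - t) < d -> f x = c) -> is_derive f t 0.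
Proof.
  intros Hd Hc. apply (is_derive_ext_ball (fun _ => c) f t 0 0 d Hd).
  - intros x Hx. symmetry. apply Hc, Hx.
  - reflexivity.
  - apply (is_derive_const c t).
Qed.

Lemma continuity_pt_is_derive (f : R -> R) (x l : R) : is_derive f x l -> continuity_pt f x.
Proof.
  intros H. apply continuity_pt_filterlim, (ex_derive_continuous f x). exists l. exact H.
Qed.

Lemma continuity_pt_ex_derive (f : R -> R) (x : R) : ex_derive f x -> continuity_pt f x.
Proof. intros [l H]. apply (continuity_pt_is_derive f x l H). Qed.

Lemma MVT_is_derive (f df : R -> R) (a b : R) : a <= b ->
  (forall t, a <= t <= b -> is_derive f t (df t)) ->
  exists c, a <= c <= b /\ f b - f a = df c * (b - a).
Proof.
  intros Hab Hd.
  destruct (MVT_gen f a b df) as [c [Hc Heq]].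
  - intros t Ht. apply Hd. rewrite Rmin_left, Rmax_right in Ht by lra. lra.
  - intros t Ht. rewrite Rmin_left, Rmax_right in Ht by lra.
    apply (continuity_pt_is_derive f t (df t)). apply Hd; lra.
  - rewrite Rmin_left, Rmax_right in Hc by lra. exists c. split; auto.
Qed.

Lemma incr_of_is_derive_nonneg (f df : R -> R) (a b : R) : a <= b ->
  (forall t, a <= t <= b -> is_derive f t (df t)) ->
  (forall t, a <= t <= b -> 0 <= df t) -> f a <= f b.
Proof.
  intros Hab Hd Hp. destruct (MVT_is_derive f df a b Hab Hd) as [c [Hc Heq]].
  assert (0 <= df c * (b - a)) by (apply Rmult_le_pos; [apply Hp; lra | lra]).
  lra.
Qed.

Lemma decr_of_is_derive_nonpos (f df : R -> R) (a b : R) : a <= b ->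
  (forall t, a <= t <= b -> is_derive f t (df t)) ->
  (forall t, a <= t <= b -> df t <= 0) -> f b <= f a.
Proof.
  intros Hab Hd Hp.
  assert (H := incr_of_is_derive_nonneg (fun t => - f t) (fun t => - df t) a b Hab).
  cbv beta in H. enough (- f a <= - f b) by lra.
  apply H.
  - intros t Ht. apply is_derive_Reals, derivable_pt_lim_opp, is_derive_Reals, Hd, Ht.
  - intros t Ht. specialize (Hp t Ht). lra.
Qed.

Lemma is_derive_mult_exp (E : R -> R) (dE c t : R) : is_derive E t dE ->
  is_derive (fun t => E t * exp (c * t)) t ((dE + c * E t) * exp (c * t)).
Proof.
  intros H. apply (is_derive_ext_eq (fun t => E t * exp (c * t)) _ t
    (dE * exp (c * t) + E t * (c * exp (c * t)))); [reflexivity | ring |].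
  apply (is_derive_mult_R E (fun t => exp (c * t))); [exact H |]. auto_derive; [auto | ring].
Qed.

(* Multiplying by [exp (-+ L t)] turns [|E'| <= L E] into monotonicity. *)
Lemma gronwall_zero (E dE : R -> R) (L p q t0 : R) :
  p <= t0 <= q ->
  (forall t, p <= t <= q -> is_derive E t (dE t)) ->
  (forall t, p <= t <= q -> 0 <= E t) ->
  (forall t, p <= t <= q -> Rabs (dE t) <= L * E t) ->
  E t0 = 0 -> forall t, p <= t <= q -> E t = 0.
Proof.
  intros Ht0 Hd Hpos Hb H0 t Ht.
  assert (HE : 0 <= E t) by (apply Hpos; lra).
  destruct (Rle_dec t0 t) as [Hle|Hlt].
  - assert (Hg : E t * exp (- L * t) <= E t0 * exp (- L * t0)).
    { apply (decr_of_is_derive_nonpos (fun t => E t * exp (- L * t))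
        (fun t => (dE t + - L * E t) * exp (- L * t))); [lra | |].
      - intros w Hw. apply is_derive_mult_exp, Hd; lra.
      - intros w Hw. assert (Hx := Rabs_le_between' (dE w) 0 (L * E w)).
        rewrite Rminus_0_r, Rplus_0_l in Hx. apply Hx in Hb; [| lra].
        assert (0 < exp (- L * w)) by apply exp_pos. nra. }
    rewrite H0, Rmult_0_l in Hg.
    assert (0 < exp (- L * t)) by apply exp_pos. nra.
  - assert (Hg : E t * exp (L * t) <= E t0 * exp (L * t0)).
    { apply (incr_of_is_derive_nonneg (fun t => E t * exp (L * t))
        (fun t => (dE t + L * E t) * exp (L * t))); [lra | |].
      - intros w Hw. apply is_derive_mult_exp, Hd; lra.
      - intros w Hw. assert (Hx := Rabs_le_between' (dE w) 0 (L * E w)).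
        rewrite Rminus_0_r, Rplus_0_l in Hx. apply Hx in Hb; [| lra].
        assert (0 < exp (L * w)) by apply exp_pos. nra. }
    rewrite H0, Rmult_0_l in Hg.
    assert (0 < exp (L * t)) by apply exp_pos. nra.
Qed.

Lemma is_derive_0_at_max (f : R -> R) (l a b c : R) : a < c < b -> is_derive f c l ->
  (forall x, a < x < b -> f x <= f c) -> l = 0.
Proof.
  intros Hc Hd Hm. apply is_derive_Reals in Hd.
  set (pr := exist _ l Hd : derivable_pt f c).
  rewrite <- (derive_pt_eq_0 f c l pr Hd).
  apply (deriv_maximum f a b c pr); try lra. intros; apply Hm; lra.
Qed.

Lemma is_derive_0_at_min (f : R -> R) (l a b c : R) : a < c < b -> is_derive f c l ->
  (forall x, a < x < b -> f c <= f x) -> l = 0.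
Proof.
  intros Hc Hd Hm. apply is_derive_Reals in Hd.
  set (pr := exist _ l Hd : derivable_pt f c).
  rewrite <- (derive_pt_eq_0 f c l pr Hd).
  apply (deriv_minimum f a b c pr); try lra. intros; apply Hm; lra.
Qed.

(* If [f'' c > 0] then [f' > 0] just right of [c], and the MVT makes [f] increase there. *)
Lemma second_derive_nonpos_at_max (f f1 : R -> R) (l2 a b c : R) : a < c < b ->
  (forall t, a < t < b -> is_derive f t (f1 t)) ->
  is_derive f1 c l2 ->
  (forall x, a < x < b -> f x <= f c) -> l2 <= 0.
Proof.
  intros Hc Hd Hd2 Hm.
  assert (H1 : f1 c = 0) by (apply (is_derive_0_at_max f (f1 c) a b c); auto).
  destruct (Rle_dec l2 0) as [|Hpos]; auto. exfalso.
  apply is_derive_Reals in Hd2.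
  destruct (Hd2 (l2 / 2) ltac:(lra)) as [del Hdel].
  set (h0 := Rmin del (b - c) / 2).
  assert (Hh0 : 0 < h0 /\ h0 < del /\ c + h0 < b).
  { unfold h0. assert (0 < del) by apply (cond_pos del).
    assert (Rmin del (b - c) <= del) by apply Rmin_l.
    assert (Rmin del (b - c) <= b - c) by apply Rmin_r.
    assert (0 < Rmin del (b - c)) by (apply Rmin_glb_lt; lra). lra. }
  assert (Hpos1 : forall h, 0 < h <= h0 -> 0 < f1 (c + h)).
  { intros h Hh. assert (Hx := Hdel h ltac:(lra) ltac:(rewrite Rabs_pos_eq; lra)).
    rewrite H1, Rminus_0_r in Hx. apply Rabs_def2 in Hx.
    assert (Hq : 0 < f1 (c + h) / h) by lra.
    apply (Rmult_lt_compat_r h) in Hq; [| lra].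
    unfold Rdiv in Hq. rewrite Rmult_assoc, Rinv_l, Rmult_1_r in Hq; lra. }
  destruct (MVT_is_derive f f1 c (c + h0 / 2)) as [x1 [Hx1 E1]]; [lra | intros; apply Hd; lra |].
  destruct (MVT_is_derive f f1 (c + h0 / 2) (c + h0)) as [x2 [Hx2 E2]]; [lra | intros; apply Hd; lra |].
  assert (0 <= f1 x1).
  { destruct (Req_dec x1 c) as [->|Hne]; [lra|].
    replace x1 with (c + (x1 - c)) by ring. left; apply Hpos1; lra. }
  assert (0 < f1 x2) by (replace x2 with (c + (x2 - c)) by ring; apply Hpos1; lra).
  assert (f (c + h0) <= f c) by (apply Hm; lra).
  nra.
Qed.

Lemma radial_max_principle_strict (f f1 f2 : R -> R) (al be : R) :
  0 < al < be ->
  (forall t, al <= t <= be -> is_derive f t (f1 t)) ->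
  (forall t, al <= t <= be -> is_derive f1 t (f2 t)) ->
  f al < 0 -> f be < 0 ->
  (forall t, al < t < be -> 0 < f t -> 0 < f2 t - f1 t / t) ->
  forall t, al <= t <= be -> f t <= 0.
Proof.
  intros Hab Hd1 Hd2 Ha Hb Hsub.
  destruct (continuity_ab_maj f al be ltac:(lra)) as [c [Hmax Hc]].
  { intros t Ht. apply (continuity_pt_is_derive f t (f1 t)), Hd1, Ht. }
  intros t Ht. apply Rnot_lt_le. intros Hft.
  assert (Hfc : 0 < f c) by (specialize (Hmax t Ht); lra).
  assert (Hc' : al < c < be).
  { split; destruct (Req_dec c al) as [->|]; try lra; destruct (Req_dec c be) as [->|]; lra. }
  assert (Hf1c : f1 c = 0).
  { apply (is_derive_0_at_max f (f1 c) al be c Hc'); [apply Hd1; lra | intros; apply Hmax; lra]. }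
  assert (Hf2c : f2 c <= 0).
  { apply (second_derive_nonpos_at_max f f1 (f2 c) al be c Hc').
    - intros; apply Hd1; lra.
    - apply Hd2; lra.
    - intros; apply Hmax; lra. }
  specialize (Hsub c Hc' Hfc). rewrite Hf1c in Hsub. unfold Rdiv in Hsub. lra.
Qed.

(* Perturbing [f] by [eps (t^4 - be^4)] adds [8 eps t^2 > 0] to [f'' - f'/t]. *)
Lemma radial_max_principle (f f1 f2 : R -> R) (al be : R) :
  0 < al < be ->
  (forall t, al <= t <= be -> is_derive f t (f1 t)) ->
  (forall t, al <= t <= be -> is_derive f1 t (f2 t)) ->
  f al < 0 -> f be < 0 ->
  (forall t, al < t < be -> 0 < f t -> 0 <= f2 t - f1 t / t) ->
  forall t, al <= t <= be -> f t <= 0.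
Proof.
  intros Hab Hd1 Hd2 Ha Hb Hsub t1 Ht1.
  destruct (Rle_dec (f t1) 0) as [|Hp]; auto. exfalso.
  assert (Hb4 : 0 < be ^ 4) by (apply pow_lt; lra).
  set (eps := f t1 / (2 * (be ^ 4 + 1))).
  assert (Heps : 0 < eps) by (unfold eps; apply Rdiv_lt_0_compat; lra).
  assert (Hle4 : forall t, al <= t <= be -> 0 <= t ^ 4 <= be ^ 4).
  { intros t Ht. split; [apply pow_le; lra | apply pow_incr; lra]. }
  assert (Hg := radial_max_principle_strict (fun t => f t + eps * (t ^ 4 - be ^ 4))
    (fun t => f1 t + eps * (4 * t ^ 3)) (fun t => f2 t + eps * (12 * t ^ 2)) al be Hab).
  cbv beta in Hg.
  enough (f t1 + eps * (t1 ^ 4 - be ^ 4) <= 0).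
  { assert (eps * (be ^ 4 + 1) = f t1 / 2) by (unfold eps; field; lra).
    specialize (Hle4 t1 Ht1). nra. }
  apply Hg; auto.
  - intros t Ht. apply (is_derive_plus_R f (fun t => eps * (t ^ 4 - be ^ 4))); [apply Hd1; auto |].
    auto_derive; [auto | simpl; ring].
  - intros t Ht. apply (is_derive_plus_R f1 (fun t => eps * (4 * t ^ 3))); [apply Hd2; auto |].
    auto_derive; [auto | simpl; ring].
  - specialize (Hle4 al ltac:(lra)). assert (al ^ 4 <= be ^ 4) by (apply pow_incr; lra). nra.
  - replace (be ^ 4 - be ^ 4) with 0 by ring. lra.
  - intros t Ht Hpos.
    assert (Hft : 0 < f t) by (specialize (Hle4 t ltac:(lra)); nra).
    specialize (Hsub t Ht Hft).
    replace (f2 t + eps * (12 * t ^ 2) - (f1 t + eps * (4 * t ^ 3)) / t)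
      with (f2 t - f1 t / t + 8 * eps * t ^ 2) by (field; lra).
    assert (0 < t ^ 2) by (apply pow_lt; lra). nra.
Qed.

(* Gronwall applied to the energy [f^2 + f'^2]. *)
Lemma ode2_unique_zero (f f1 f2 : R -> R) p q t0 KA KB :
  p <= t0 <= q -> 0 <= KA -> 0 <= KB ->
  (forall t, p <= t <= q -> is_derive f t (f1 t)) ->
  (forall t, p <= t <= q -> is_derive f1 t (f2 t)) ->
  (forall t, p <= t <= q -> Rabs (f2 t) <= KA * Rabs (f1 t) + KB * Rabs (f t)) ->
  f t0 = 0 -> f1 t0 = 0 -> forall t, p <= t <= q -> f t = 0.
Proof.
  intros Ht0 HKA HKB Hd1 Hd2 Hb H0 H1 t Ht.
  assert (Hz : f t ^ 2 + f1 t ^ 2 = 0).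
  { apply (gronwall_zero (fun t => f t ^ 2 + f1 t ^ 2) (fun t => 2 * f t * f1 t + 2 * f1 t * f2 t)
      (1 + 2 * KA + KB) p q t0 Ht0); auto.
    - intros w Hw.
      apply (is_derive_ext_eq (fun t => f t * f t + f1 t * f1 t) _ w
        (f1 w * f w + f w * f1 w + (f2 w * f1 w + f1 w * f2 w))); [intros; simpl; ring | ring |].
      apply is_derive_plus_R; apply is_derive_mult_R; auto.
    - intros w Hw. cbv beta. nra.
    - intros w Hw. specialize (Hb w Hw). cbv beta.
      set (a := f w) in *. set (b := f1 w) in *. set (c := f2 w) in *.
      assert (Ha2 : Rabs a ^ 2 = a ^ 2) by (rewrite RPow_abs; apply Rabs_pos_eq, pow2_ge_0).
      assert (Hb2 : Rabs b ^ 2 = b ^ 2) by (rewrite RPow_abs; apply Rabs_pos_eq, pow2_ge_0).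
      assert (Hab : Rabs (2 * a * b) = 2 * Rabs a * Rabs b)
        by (rewrite !Rabs_mult, (Rabs_pos_eq 2) by lra; ring).
      assert (Hbc : Rabs (2 * b * c) = 2 * Rabs b * Rabs c)
        by (rewrite !Rabs_mult, (Rabs_pos_eq 2) by lra; ring).
      assert (0 <= Rabs a) by apply Rabs_pos. assert (0 <= Rabs b) by apply Rabs_pos.
      assert (Hamgm : 2 * Rabs a * Rabs b <= a ^ 2 + b ^ 2).
      { assert (0 <= (Rabs a - Rabs b) ^ 2) by apply pow2_ge_0. nra. }
      assert (Hc : 2 * Rabs b * Rabs c <= 2 * Rabs b * (KA * Rabs b + KB * Rabs a))
        by (apply Rmult_le_compat_l; [lra | exact Hb]).
      eapply Rle_trans; [apply Rabs_triang |]. rewrite Hab, Hbc. nra.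
    - cbv beta; rewrite H0, H1; simpl; lra. }
  nra.
Qed.

Lemma radial_ode2_unique_zero (f f1 f2 V : R -> R) (c p q t0 : R) :
  0 < p -> p <= t0 <= q ->
  (forall t, p <= t <= q -> is_derive f t (f1 t)) ->
  (forall t, p <= t <= q -> is_derive f1 t (f2 t)) ->
  (forall t, p <= t <= q -> continuity_pt V t) ->
  (forall t, p <= t <= q -> f2 t = c * f1 t / t + V t * f t) ->
  f t0 = 0 -> f1 t0 = 0 -> forall t, p <= t <= q -> f t = 0.
Proof.
  intros Hp Ht0 Hd1 Hd2 HV Hode H0 H1.
  destruct (continuity_ab_maj (fun t => Rabs (V t)) p q ltac:(lra)) as [x [HM Hx]].
  { intros t Ht. apply (continuity_pt_comp V Rabs t (HV t Ht) (Rcontinuity_abs (V t))). }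
  apply (ode2_unique_zero f f1 f2 p q t0 (Rabs c / p) (Rabs (V x))); auto.
  - apply Rdiv_le_0_compat; [apply Rabs_pos | lra].
  - apply Rabs_pos.
  - intros t Ht. rewrite Hode by auto.
    eapply Rle_trans; [apply Rabs_triang |].
    rewrite Rabs_div, !Rabs_mult, (Rabs_pos_eq t) by lra.
    assert (HVt : Rabs (V t) <= Rabs (V x)) by apply (HM t Ht).
    assert (Hq : Rabs c * Rabs (f1 t) / t <= Rabs c / p * Rabs (f1 t)).
    { assert (Hcf : 0 <= Rabs c * Rabs (f1 t)) by (apply Rmult_le_pos; apply Rabs_pos).
      assert (Hinv : / t <= / p) by (apply Rinv_le_contravar; lra).
      apply (Rmult_le_compat_l _ _ _ Hcf) in Hinv. unfold Rdiv. lra. }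
    assert (0 <= Rabs (f t)) by apply Rabs_pos.
    assert (Rabs (V t) * Rabs (f t) <= Rabs (V x) * Rabs (f t)) by (apply Rmult_le_compat_r; auto).
    lra.
Qed.

Lemma wronskian_zero_proportional (v y : R -> R) :
  (forall t, 0 < t -> ex_derive v t /\ ex_derive y t /\ y t <> 0 /\
    Derive v t * y t - v t * Derive y t = 0) ->
  forall t, 0 < t -> v t = v 1 / y 1 * y t.
Proof.
  intros H t Ht.
  assert (Hd : forall w, 0 < w -> is_derive (fun w => v w / y w) w 0).
  { intros w Hw. destruct (H w Hw) as [Hv [Hy [Hy0 E]]].
    apply (is_derive_ext_eq (fun w => v w / y w) _ w ((Derive v w * y w - v w * Derive y w) / y w ^ 2));
      [reflexivity | rewrite E; field; auto |].
    apply is_derive_div; auto; apply Derive_correct; auto. }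
  assert (Hc : forall a b, 0 < a <= b -> v a / y a = v b / y b).
  { intros a b Hab. apply Rle_antisym.
    - apply (incr_of_is_derive_nonneg (fun w => v w / y w) (fun _ => 0));
        [lra | intros; apply Hd; lra | intros; lra].
    - apply (decr_of_is_derive_nonpos (fun w => v w / y w) (fun _ => 0));
        [lra | intros; apply Hd; lra | intros; lra]. }
  destruct (H t Ht) as [_ [_ [Hy0 _]]].
  destruct (Rle_dec t 1).
  - rewrite <- (Hc t 1) by lra. field. auto.
  - rewrite (Hc 1 t) by lra. field. auto.
Qed.

Lemma continuous_factor_zero (u s : R -> R) :
  (forall t, 0 < t -> continuity_pt u t) ->
  (forall p q, 0 < p < q -> ~ (forall t, p < t < q -> s t = 0)) ->
  (forall t, 0 < t -> u t = 0 \/ s t = 0) -> forall t, 0 < t -> u t = 0.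
Proof.
  intros Hu Hs Hus t1 Ht1. destruct (Req_dec (u t1) 0) as [|Hne]; auto. exfalso.
  destruct (Hu t1 Ht1 (Rabs (u t1)) ltac:(apply Rabs_pos_lt; auto)) as [al [Hal Hal']].
  set (d := Rmin al (t1 / 2)).
  assert (Hd : 0 < d /\ d <= al /\ d <= t1 / 2)
    by (unfold d; split; [apply Rmin_glb_lt; lra | split; [apply Rmin_l | apply Rmin_r]]).
  apply (Hs (t1 - d) (t1 + d)); [lra|].
  intros t Ht. destruct (Hus t ltac:(lra)) as [Hu0|]; auto. exfalso.
  destruct (Req_dec t t1) as [->|Hne2]; [auto|].
  assert (Rabs (u t - u t1) < Rabs (u t1)).
  { apply (Hal' t). split; [split; [exact I | auto] | simpl; unfold R_dist; apply Rabs_def1; lra]. }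
  rewrite Hu0, Rminus_0_l, Rabs_Ropp in H. lra.
Qed.

(** * Powers and asymptotics *)

Lemma pow2_eq_0 x : x ^ 2 = 0 -> x = 0.
Proof.
  intros H. destruct (Req_dec x 0) as [|Hx]; [auto |].
  exfalso. now apply (pow_nonzero x 2) in Hx.
Qed.

Lemma Rpower_pos x y : 0 < Rpower x y.
Proof. unfold Rpower; apply exp_pos. Qed.

Lemma Rpower_le_of_le1 t a b : 0 < t <= 1 -> b <= a -> Rpower t a <= Rpower t b.
Proof.
  intros Ht Hab. replace a with (b + (a - b)) by ring. rewrite Rpower_plus.
  assert (H1 : Rpower t (a - b) <= Rpower 1 (a - b)) by (apply Rle_Rpower_l; lra).
  unfold Rpower at 2 in H1. rewrite ln_1, Rmult_0_r, exp_0 in H1.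
  assert (0 < Rpower t b) by apply Rpower_pos. nra.
Qed.

Lemma pow2_le_of_Rabs_le x B : Rabs x <= B -> x ^ 2 <= B ^ 2.
Proof.
  intros H. rewrite <- (Rabs_pos_eq (x ^ 2)) by apply pow2_ge_0. rewrite <- RPow_abs.
  apply pow_incr. split; [apply Rabs_pos | exact H].
Qed.

Lemma pow2_ge_of_Rabs_ge x B : 0 <= B -> B <= Rabs x -> B ^ 2 <= x ^ 2.
Proof.
  intros HB H. rewrite <- (Rabs_pos_eq (x ^ 2)) by apply pow2_ge_0. rewrite <- RPow_abs.
  apply pow_incr. lra.
Qed.


Lemma Rpower_sqr t a : 0 < t -> Rpower t a ^ 2 = Rpower t (2 * a).
Proof. intros Ht. simpl. rewrite Rmult_1_r, <- Rpower_plus. f_equal. ring. Qed.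

Lemma Rpower_2 t : 0 < t -> Rpower t 2 = t ^ 2.
Proof. intros Ht. replace 2 with (INR 2) by (simpl; ring). apply Rpower_pow; auto. Qed.

Lemma Rmax3_le a b c r : Rmax a (Rmax b c) <= r -> a <= r /\ b <= r /\ c <= r.
Proof.
  intros H. assert (Ha := Rmax_l a (Rmax b c)). assert (Hbc := Rmax_r a (Rmax b c)).
  assert (Hb := Rmax_l b c). assert (Hc := Rmax_r b c). lra.
Qed.

Lemma Rmin3_le a b c : Rmin a (Rmin b c) <= a /\ Rmin a (Rmin b c) <= b /\ Rmin a (Rmin b c) <= c.
Proof.
  assert (Ha := Rmin_l a (Rmin b c)). assert (Hbc := Rmin_r a (Rmin b c)).
  assert (Hb := Rmin_l b c). assert (Hc := Rmin_r b c). lra.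
Qed.

Lemma ln_le_sub1 x : 0 < x -> ln x <= x - 1.
Proof. intros Hx. assert (H := exp_ineq1_le (ln x)). rewrite exp_ln in H; lra. Qed.

Lemma ln_le_2sqrt r : 1 <= r -> 0 <= ln r <= 2 * sqrt r.
Proof.
  intros Hr.
  assert (Hsr : sqrt r * sqrt r = r) by (apply sqrt_sqrt; lra).
  assert (Hsq : 0 < sqrt r) by (apply sqrt_lt_R0; lra).
  split; [rewrite <- ln_1; apply ln_le; lra |].
  replace (ln r) with (2 * ln (sqrt r)) by (rewrite <- Hsr at 2; rewrite ln_mult by lra; ring).
  assert (ln (sqrt r) <= sqrt r - 1) by (apply ln_le_sub1; lra). lra.
Qed.

Lemma at_right0_interval (P : R -> Prop) :
  at_right 0 P -> exists d, 0 < d /\ forall r, 0 < r < d -> P r.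
Proof.
  intros [e He]. exists e. split; [apply cond_pos|].
  intros r Hr. apply He; [|lra].
  change (Rabs (r - 0) < e). rewrite Rminus_0_r, Rabs_pos_eq; lra.
Qed.

Lemma lim_right0_small (f : R -> R) : filterlim f (at_right 0) (locally 0) ->
  forall e, 0 < e -> exists d, 0 < d /\ forall r, 0 < r < d -> Rabs (f r) < e.
Proof.
  intros H e He.
  apply at_right0_interval, (H (fun y => Rabs y < e)).
  exists (mkposreal e He). intros y Hy.
  change (Rabs (y - 0) < e) in Hy. rewrite Rminus_0_r in Hy. exact Hy.
Qed.

Lemma near0_and (P Q : R -> Prop) :
  (exists d, 0 < d /\ forall t, 0 < t < d -> P t) ->
  (exists d, 0 < d /\ forall t, 0 < t < d -> Q t) ->
  exists d, 0 < d /\ forall t, 0 < t < d -> P t /\ Q t.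
Proof.
  intros [d1 [Hd1 H1]] [d2 [Hd2 H2]]. exists (Rmin d1 d2). split; [apply Rmin_glb_lt; auto |].
  intros t Ht. assert (Rmin d1 d2 <= d1) by apply Rmin_l. assert (Rmin d1 d2 <= d2) by apply Rmin_r.
  split; [apply H1 | apply H2]; lra.
Qed.

Lemma at_right0_small_eps (P : R -> Prop) (eps : R -> R) e :
  at_right 0 P -> filterlim eps (at_right 0) (locally 0) -> 0 < e ->
  exists d, 0 < d /\ forall r, 0 < r < d -> P r /\ Rabs (eps r) < e.
Proof.
  intros HP Heps He. apply near0_and; [apply at_right0_interval, HP | apply lim_right0_small; auto].
Qed.

Lemma Rpower_small_near0 al : 0 < al -> forall e, 0 < e ->
  exists d, 0 < d /\ forall r, 0 < r < d -> Rpower r al < e.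
Proof.
  intros Hal e He. exists (Rpower e (/ al)). split; [apply Rpower_pos|].
  intros r Hr. apply Rlt_le_trans with (Rpower (Rpower e (/ al)) al).
  - apply Rlt_Rpower_l; lra.
  - rewrite Rpower_mult, Rinv_l, Rpower_1 by lra. lra.
Qed.

Lemma Rpower_sum_small_near0 c1 c2 e1 e2 : 0 <= c1 -> 0 <= c2 -> 0 < e1 -> (0 < e2 \/ c2 = 0) ->
  forall e, 0 < e -> exists d, 0 < d /\ forall t, 0 < t < d -> c1 * Rpower t e1 + c2 * Rpower t e2 < e.
Proof.
  intros Hc1 Hc2 He1 He2 e He.
  assert (Hterm : forall c p, 0 <= c -> 0 < p ->
    exists d, 0 < d /\ forall t, 0 < t < d -> c * Rpower t p < e / 2).
  { intros c p Hc Hp.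
    destruct (Rpower_small_near0 p Hp (e / (2 * (c + 1)))) as [d [Hd H]];
      [apply Rdiv_lt_0_compat; lra |].
    exists d. split; auto. intros t Ht. specialize (H t Ht).
    assert (0 < Rpower t p) by apply Rpower_pos.
    apply (Rmult_lt_compat_l (c + 1)) in H; [| lra].
    replace ((c + 1) * (e / (2 * (c + 1)))) with (e / 2) in H by (field; lra). nra. }
  assert (H2 : exists d2, 0 < d2 /\ forall t, 0 < t < d2 -> c2 * Rpower t e2 < e / 2).
  { destruct He2 as [He2 | ->]; [apply Hterm; auto |].
    exists 1. split; [lra|]. intros. rewrite Rmult_0_l. lra. }
  destruct (near0_and _ _ (Hterm c1 e1 Hc1 He1) H2) as [d [Hd H]].
  exists d. split; auto. intros t Ht. destruct (H t Ht). lra.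
Qed.

(* [q ln r <= 2 |q| sqrt r <= al r / 2] for large [r]. *)
Lemma Rpower_exp_small_at_infty q al : 0 < al -> forall e, 0 < e ->
  exists R0, forall r, R0 <= r -> Rpower r q * exp (- al * r) < e.
Proof.
  intros Hal e He.
  set (A := 4 * (Rabs q + 1) / al).
  exists (Rmax 1 (Rmax (A * A) (- 2 * ln e / al + 1))).
  intros r Hr.
  destruct (Rmax3_le _ _ _ _ Hr) as [H1 [H2 H3]].
  unfold Rpower. rewrite <- exp_plus.
  assert (Hsr : sqrt r * sqrt r = r) by (apply sqrt_sqrt; lra).
  destruct (ln_le_2sqrt r H1) as [Hln0 Hln].
  assert (Hq0 : 0 <= Rabs q) by apply Rabs_pos.
  assert (HA : 0 < A) by (unfold A; apply Rdiv_lt_0_compat; lra).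
  assert (HAs : A <= sqrt r) by (apply Rsqr_incr_0_var; [unfold Rsqr; rewrite Hsr; lra |
      apply sqrt_pos]).
  assert (Hq : q * ln r <= Rabs q * (2 * sqrt r)).
  { apply Rle_trans with (Rabs q * ln r).
    - apply Rmult_le_compat_r; [lra | apply Rle_abs].
    - apply Rmult_le_compat_l; [apply Rabs_pos | lra]. }
  assert (Hq2 : Rabs q * (2 * sqrt r) <= al * r / 2).
  { assert (4 * (Rabs q + 1) <= al * sqrt r).
    { apply (Rmult_le_compat_l al) in HAs; [|lra].
      unfold A in HAs. replace (al * (4 * (Rabs q + 1) / al)) with (4 * (Rabs q + 1))
          in HAs by (field; lra). lra. }
    assert (0 <= Rabs q) by apply Rabs_pos.
    assert (0 <= sqrt r) by apply sqrt_pos.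
    nra. }
  apply Rlt_le_trans with (exp (ln e)); [|rewrite exp_ln; lra].
  apply exp_increasing.
  assert (al * r > - 2 * ln e).
  { apply (Rmult_le_compat_l al) in H3; [|lra].
    replace (al * (- 2 * ln e / al + 1)) with (- 2 * ln e + al) in H3 by (field; lra). lra. }
  lra.
Qed.

Lemma exp_to_close f L : exp_to f L -> forall e, 0 < e ->
  exists R0, 0 < R0 /\ forall r, R0 <= r -> Rabs (f r - L) < e.
Proof.
  intros [C [a [R1 [Ha Hb]]]] e He.
  destruct (Rpower_exp_small_at_infty 0 a Ha (e / (Rabs C + 1))) as [R2 HR2].
  { apply Rdiv_lt_0_compat; [lra | assert (0 <= Rabs C) by apply Rabs_pos; lra]. }
  exists (Rmax 1 (Rmax R1 R2)). split; [apply Rlt_le_trans with 1; [lra | apply Rmax_l]|].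
  intros r Hr.
  destruct (Rmax3_le _ _ _ _ Hr) as [H1 [H2 H3]].
  specialize (HR2 r H3). rewrite Rpower_O, Rmult_1_l in HR2 by lra.
  eapply Rle_lt_trans; [apply Hb; auto|].
  assert (0 < exp (- a * r)) by apply exp_pos.
  assert (C <= Rabs C) by apply Rle_abs.
  apply (Rmult_lt_compat_l (Rabs C + 1)) in HR2; [| assert (0 <= Rabs C) by apply Rabs_pos; lra].
  replace ((Rabs C + 1) * (e / (Rabs C + 1))) with e in HR2
    by (field; assert (0 <= Rabs C) by apply Rabs_pos; lra).
  nra.
Qed.

Lemma asym0_pow_bounds (f : R -> R) c k : asym0_pow f c k ->
  exists d, 0 < d /\ forall t, 0 < t < d ->
    Rabs (f t) <= 2 * Rabs c * Rpower t k /\ Rabs c / 2 * Rpower t k <= Rabs (f t).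
Proof.
  intros [eps [Heps Hev]].
  destruct (at_right0_small_eps _ eps (1/2) Hev Heps ltac:(lra)) as [d [Hd H]].
  exists d. split; auto. intros t Ht. destruct (H t Ht) as [H1 H2]. apply Rabs_def2 in H2.
  rewrite H1, !Rabs_mult, (Rabs_pos_eq (Rpower t k)) by (left; apply Rpower_pos).
  rewrite (Rabs_pos_eq (1 + eps t)) by lra.
  assert (0 < Rpower t k) by apply Rpower_pos. assert (0 <= Rabs c) by apply Rabs_pos.
  assert (0 <= Rabs c * Rpower t k) by (apply Rmult_le_pos; lra).
  split; nra.
Qed.

Lemma nondecr_small_at_infty_nonpos (F : R -> R) :
  (forall t1 t2, 0 < t1 <= t2 -> F t1 <= F t2) ->
  (forall e, 0 < e -> exists R0, 0 < R0 /\ forall t, R0 <= t -> Rabs (F t) < e) ->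
  forall t, 0 < t -> F t <= 0.
Proof.
  intros Hm Hinf t Ht. apply Rnot_lt_le. intros Hp.
  destruct (Hinf (F t) Hp) as [R0 [HR0 HR0']].
  specialize (HR0' (Rmax t R0) (Rmax_r _ _)). apply Rabs_def2 in HR0'.
  specialize (Hm t (Rmax t R0) ltac:(split; [lra | apply Rmax_l])). lra.
Qed.

Lemma nondecr_small_at_ends_zero (F : R -> R) :
  (forall t1 t2, 0 < t1 <= t2 -> F t1 <= F t2) ->
  (forall e, 0 < e -> exists R0, 0 < R0 /\ forall t, R0 <= t -> Rabs (F t) < e) ->
  (forall e, 0 < e -> exists d, 0 < d /\ forall t, 0 < t < d -> Rabs (F t) < e) ->
  forall t, 0 < t -> F t = 0.
Proof.
  intros Hm Hinf H0 t Ht.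
  assert (H1 := nondecr_small_at_infty_nonpos F Hm Hinf t Ht).
  apply Rle_antisym; auto. apply Rnot_lt_le. intros Hn.
  destruct (H0 (- F t) ltac:(lra)) as [d [Hd Hd']].
  set (w := Rmin t (d / 2)).
  assert (Hw : 0 < w <= t /\ w < d).
  { unfold w. split; [split; [apply Rmin_glb_lt; lra | apply Rmin_l] |].
    eapply Rle_lt_trans; [apply Rmin_r | lra]. }
  specialize (Hd' w ltac:(lra)). apply Rabs_def2 in Hd'.
  specialize (Hm w t ltac:(lra)). lra.
Qed.

(** * The vortex profile *)

Definition rz (z : R -> R) t := t * z t.
Definition rz' (z : R -> R) t := z t + t * Derive z t.
Definition rz'' (z : R -> R) t := 2 * Derive z t + t * Derive (Derive z) t.

Lemma is_derive_rz (z : R -> R) (t : R) : C2_pos z -> 0 < t -> is_derive (rz z) t (rz' z t).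
Proof.
  intros Hz Ht. destruct (Hz t Ht) as [H1 H2]. unfold rz, rz'.
  auto_derive; eta_fix; [auto | ring].
Qed.

Lemma is_derive_rz' (z : R -> R) (t : R) : C2_pos z -> 0 < t -> is_derive (rz' z) t (rz'' z t).
Proof.
  intros Hz Ht. destruct (Hz t Ht) as [H1 H2]. unfold rz', rz''.
  auto_derive; eta_fix; [auto | ring].
Qed.

Section Vortex.

Variables (n : nat) (beta : R) (s z : R -> R).
Hypothesis HNO : NO_profile n beta s z.

Lemma NO_s_C2 : C2_pos s.
Proof. apply HNO. Qed.

Lemma NO_z_C2 : C2_pos z.
Proof. apply HNO. Qed.

Lemma NO_z_ode t : 0 < t ->
  Derive (Derive z) t + Derive z t / t - z t / t ^ 2 - z t * s t ^ 2 = 0.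
Proof. apply HNO. Qed.

Lemma NO_s_exp_to : exp_to s 1.
Proof. apply HNO. Qed.

Lemma NO_z_exp_to : exp_to z 0.
Proof. apply HNO. Qed.

Lemma rz_ode t : 0 < t -> rz'' z t - rz' z t / t = rz z t * s t ^ 2.
Proof.
  intros Ht. assert (Hz := NO_z_ode t Ht). unfold rz, rz', rz''.
  apply Rmult_eq_reg_l with (/ t); [| apply Rinv_neq_0_compat; lra].
  replace (/ t * (2 * Derive z t + t * Derive (Derive z) t - (z t + t * Derive z t) / t))
    with (Derive (Derive z) t + Derive z t / t - z t / t ^ 2) by (field; lra).
  replace (/ t * (t * z t * s t ^ 2)) with (z t * s t ^ 2) by (field; lra). lra.
Qed.

Lemma rz_small_at_infty e : 0 < e ->
  exists R0, 0 < R0 /\ forall r, R0 <= r -> Rabs (rz z r) < e.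
Proof.
  intros He. destruct NO_z_exp_to as [C [a [R1 [Ha Hb]]]].
  destruct (Rpower_exp_small_at_infty 1 a Ha (e / (Rabs C + 1))) as [R2 HR2].
  { apply Rdiv_lt_0_compat; [lra | assert (0 <= Rabs C) by apply Rabs_pos; lra]. }
  exists (Rmax 1 (Rmax R1 R2)). split; [apply Rlt_le_trans with 1; [lra | apply Rmax_l]|].
  intros r Hr.
  destruct (Rmax3_le _ _ _ _ Hr) as [H1 [H2 H3]].
  specialize (HR2 r H3). rewrite Rpower_1 in HR2 by lra.
  specialize (Hb r H2). rewrite Rminus_0_r in Hb.
  unfold rz. rewrite Rabs_mult, (Rabs_pos_eq r) by lra.
  assert (0 < exp (- a * r)) by apply exp_pos.
  assert (C <= Rabs C) by apply Rle_abs.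
  assert (0 <= Rabs C) by apply Rabs_pos.
  apply (Rmult_lt_compat_l (Rabs C + 1)) in HR2; [| lra].
  replace ((Rabs C + 1) * (e / (Rabs C + 1))) with e in HR2 by (field; lra).
  apply Rle_lt_trans with (r * ((Rabs C + 1) * exp (- a * r))); [apply Rmult_le_compat_l; nra | nra].
Qed.

Lemma rz_sub_n_near0 :
  exists C d, 0 < d /\ forall r, 0 < r < d -> Rabs (rz z r - INR n) <= C * r ^ 2.
Proof.
  destruct HNO as [_ [_ [_ [_ [_ [[z0 [eps [Heps Hev]]] _]]]]]].
  destruct (at_right0_small_eps _ eps 1 Hev Heps ltac:(lra)) as [d [Hd H]].
  exists (Rabs z0 + 1), d. split; auto. intros r Hr. destruct (H r Hr) as [H1 H2].
  unfold rz. rewrite H1.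
  replace (r * (INR n / r + z0 * r + eps r * r) - INR n) with ((z0 + eps r) * r ^ 2) by (field; lra).
  rewrite Rabs_mult, (Rabs_pos_eq (r ^ 2)) by (apply pow_le; lra).
  apply Rmult_le_compat_r; [apply pow_le; lra|].
  eapply Rle_trans; [apply Rabs_triang|]. lra.
Qed.

Lemma rz_close_near0 t1 del : 0 < t1 -> 0 < del ->
  exists al, 0 < al < t1 /\ Rabs (rz z al - INR n) < del.
Proof.
  intros Ht1 Hdel.
  destruct rz_sub_n_near0 as [C [d [Hd H0]]].
  assert (HC : 0 <= Rabs C) by apply Rabs_pos.
  assert (HCa : C <= Rabs C) by apply Rle_abs.
  set (al := Rmin (t1 / 2) (Rmin (d / 2) (Rmin 1 (del / (2 * (Rabs C + 1)))))).
  assert (Hal1 : 0 < al).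
  { unfold al. repeat apply Rmin_glb_lt; try lra. apply Rdiv_lt_0_compat; lra. }
  destruct (Rmin3_le (t1 / 2) (d / 2) (Rmin 1 (del / (2 * (Rabs C + 1))))) as [Hal2 [Hal3 Hal']].
  fold al in Hal2, Hal3, Hal'.
  assert (Hal4 : al <= 1) by (eapply Rle_trans; [exact Hal' | apply Rmin_l]).
  assert (Hal5 : al <= del / (2 * (Rabs C + 1))) by (eapply Rle_trans; [exact Hal' | apply Rmin_r]).
  exists al. split; [lra|].
  specialize (H0 al ltac:(lra)).
  apply Rle_lt_trans with (C * al ^ 2); auto.
  assert (C * al ^ 2 <= Rabs C * al ^ 2) by (apply Rmult_le_compat_r; [apply pow_le|]; lra).
  assert (Rabs C * al ^ 2 <= Rabs C * al) by (apply Rmult_le_compat_l; [lra|]; simpl; nra).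
  assert (al * (2 * (Rabs C + 1)) <= del).
  { apply Rmult_le_compat_r with (r := 2 * (Rabs C + 1)) in Hal5; [|lra].
    replace (del / (2 * (Rabs C + 1)) * (2 * (Rabs C + 1))) with del in Hal5 by (field; lra). lra. }
  nra.
Qed.

Lemma s_not_zero_on_interval p q : 0 < p < q -> ~ (forall t, p < t < q -> s t = 0).
Proof.
  intros Hpq Hs0.
  destruct HNO as [Hs [Hz [Hode [_ [_ [_ [Hsinf _]]]]]]].
  set (t0 := (p + q) / 2).
  assert (Ht0 : 0 < t0) by (unfold t0; lra).
  destruct (exp_to_close s 1 Hsinf (1/2) ltac:(lra)) as [R0 [HR0 HR0']].
  set (R := Rmax (t0 + 1) R0).
  assert (HR : t0 + 1 <= R /\ R0 <= R) by (split; [apply Rmax_l | apply Rmax_r]).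
  enough (s R = 0) as HsR.
  { specialize (HR0' R ltac:(lra)). rewrite HsR in HR0'. apply Rabs_def2 in HR0'. lra. }
  apply (radial_ode2_unique_zero s (Derive s) (Derive (Derive s))
    (fun t => z t ^ 2 + beta / 2 * (s t ^ 2 - 1)) (-1) t0 R t0); try lra.
  - intros t Ht. apply Derive_correct, Hs; lra.
  - intros t Ht. apply Derive_correct, Hs; lra.
  - intros t Ht. destruct (Hs t ltac:(lra)). destruct (Hz t ltac:(lra)).
    apply continuity_pt_ex_derive. auto_derive. eta_fix. auto.
  - intros t Ht. specialize (Hode t ltac:(lra)). lra.
  - apply Hs0. unfold t0; lra.
  - apply (is_derive_unique s t0 0), (is_derive_locally_const s t0 0 ((q - p) / 2)); [lra |].
    intros x Hx. apply Rabs_def2 in Hx. apply Hs0. unfold t0 in Hx; lra.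
Qed.

Lemma s_near1_at_infty : exists R0, 0 < R0 /\ forall r, R0 <= r -> 1/2 <= s r <= 3/2.
Proof.
  destruct (exp_to_close s 1 NO_s_exp_to (1/2) ltac:(lra)) as [R0 [HR0 HR0']].
  exists R0. split; auto. intros r Hr. specialize (HR0' r Hr). apply Rabs_def2 in HR0'. lra.
Qed.

Lemma s_pow_bound_near0 : exists C d, 0 < d /\ forall r, 0 < r < d -> Rabs (s r) <= C * r ^ n.
Proof.
  destruct HNO as [_ [_ [_ [_ [[s0 [eps [Heps Hev]]] _]]]]].
  destruct (at_right0_small_eps _ eps 1 Hev Heps ltac:(lra)) as [d [Hd H]].
  exists (2 * Rabs s0), d. split; auto. intros r Hr. destruct (H r Hr) as [H1 H2].
  rewrite H1, !Rabs_mult, (Rabs_pos_eq (r ^ n)) by (apply pow_le; lra).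
  assert (Rabs (1 + eps r) <= 2) by (eapply Rle_trans; [apply Rabs_triang|]; rewrite Rabs_R1; lra).
  assert (0 <= Rabs s0) by apply Rabs_pos. assert (0 <= r ^ n) by (apply pow_le; lra).
  assert (0 <= Rabs s0 * r ^ n) by (apply Rmult_le_pos; auto).
  nra.
Qed.

Hypothesis Hn : (1 <= n)%nat.

Lemma INR_n_ge1 : 1 <= INR n.
Proof. apply (le_INR 1); auto. Qed.

Lemma rz_nonneg t : 0 < t -> 0 <= rz z t.
Proof.
  intros Ht1. assert (Hn1 := INR_n_ge1).
  apply Rnot_lt_le. intros Hneg. set (del := - rz z t).
  destruct (rz_close_near0 t (INR n / 2) Ht1 ltac:(lra)) as [al [Hal Haal]].
  apply Rabs_def2 in Haal.
  destruct (rz_small_at_infty (del / 2) ltac:(unfold del; lra)) as [R1 [HR1 HR1']].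
  set (be := Rmax (t + 1) R1).
  assert (Hbe : t < be /\ R1 <= be)
    by (unfold be; split; [eapply Rlt_le_trans; [| apply Rmax_l]; lra | apply Rmax_r]).
  enough (- rz z t - del / 2 <= 0) by (unfold del in *; lra).
  apply (radial_max_principle (fun t => - rz z t - del / 2) (fun t => - rz' z t)
      (fun t => - rz'' z t) al be).
  - lra.
  - intros w Hw. apply (is_derive_ext_eq (fun t => -1 * rz z t + - (del / 2)) _ w (-1 * rz' z w));
      [intros; ring | ring | apply is_derive_affine, is_derive_rz; [apply NO_z_C2 | lra]].
  - intros w Hw. apply (is_derive_ext_eq (fun t => -1 * rz' z t + 0) _ w (-1 * rz'' z w));
      [intros; ring | ring | apply is_derive_affine, is_derive_rz'; [apply NO_z_C2 | lra]].
  - unfold del in *. lra.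
  - specialize (HR1' be ltac:(lra)). apply Rabs_def2 in HR1'. unfold del in *. lra.
  - intros w Hw Hpos.
    replace (- rz'' z w - - rz' z w / w) with (- (rz'' z w - rz' z w / w)) by (field; lra).
    rewrite rz_ode by lra.
    assert (0 <= s w ^ 2) by apply pow2_ge_0. unfold del in *. nra.
  - lra.
Qed.

Lemma rz_le_n t : 0 < t -> rz z t <= INR n.
Proof.
  intros Ht1. assert (Hn1 := INR_n_ge1).
  apply Rnot_lt_le. intros Hbig. set (del := rz z t - INR n).
  destruct (rz_close_near0 t (del / 2) Ht1 ltac:(unfold del; lra)) as [al [Hal Haal]].
  apply Rabs_def2 in Haal.
  destruct (rz_small_at_infty 1 ltac:(lra)) as [R1 [HR1 HR1']].
  set (be := Rmax (t + 1) R1).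
  assert (Hbe : t < be /\ R1 <= be)
    by (unfold be; split; [eapply Rlt_le_trans; [| apply Rmax_l]; lra | apply Rmax_r]).
  enough (rz z t - INR n - del / 2 <= 0) by (unfold del in *; lra).
  apply (radial_max_principle (fun t => rz z t - INR n - del / 2) (rz' z) (rz'' z) al be).
  - lra.
  - intros w Hw. apply (is_derive_ext_eq (fun t => 1 * rz z t + (- INR n - del / 2)) _ w (1 * rz' z w));
      [intros; ring | ring | apply is_derive_affine, is_derive_rz; [apply NO_z_C2 | lra]].
  - intros w Hw. apply is_derive_rz'; [apply NO_z_C2 | lra].
  - unfold del in *. lra.
  - specialize (HR1' be ltac:(lra)). apply Rabs_def2 in HR1'. unfold del in *. lra.
  - intros w Hw Hpos. rewrite rz_ode by lra.
    assert (0 <= s w ^ 2) by apply pow2_ge_0. nra.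
  - lra.
Qed.

(* A zero of [a >= 0] is a double zero, so [a] vanishes identically by ODE uniqueness,
   contradicting [a -> n] at [0]. *)
Lemma rz_pos t : 0 < t -> 0 < rz z t.
Proof.
  intros Ht1. assert (Hn1 := INR_n_ge1).
  destruct (Rlt_dec 0 (rz z t)) as [|Hnp]; auto. exfalso.
  assert (H0 : rz z t = 0) by (assert (Hb := rz_nonneg t Ht1); lra).
  assert (Hz := NO_z_C2). assert (Hs := NO_s_C2).
  assert (H1 : rz' z t = 0).
  { apply (is_derive_0_at_min (rz z) (rz' z t) (t / 2) (2 * t) t); [lra | apply is_derive_rz; auto |].
    intros x Hx. rewrite H0. apply rz_nonneg; lra. }
  destruct (rz_close_near0 t (INR n / 2) Ht1 ltac:(lra)) as [al [Hal Haal]].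
  apply Rabs_def2 in Haal.
  enough (rz z al = 0) by lra.
  apply (radial_ode2_unique_zero (rz z) (rz' z) (rz'' z) (fun t => s t ^ 2) 1 al t t); try lra.
  - intros w Hw. apply is_derive_rz; auto; lra.
  - intros w Hw. apply is_derive_rz'; auto; lra.
  - intros w Hw. destruct (Hs w ltac:(lra)).
    apply continuity_pt_ex_derive. auto_derive. eta_fix. auto.
  - intros w Hw. assert (Hode := rz_ode w ltac:(lra)). lra.
Qed.

Lemma rz'_div_incr t1 t2 : 0 < t1 <= t2 -> rz' z t1 / t1 <= rz' z t2 / t2.
Proof.
  intros Ht. assert (Hz := NO_z_C2).
  apply (incr_of_is_derive_nonneg (fun t => rz' z t / t) (fun t => rz z t * s t ^ 2 / t)); [lra | |].
  - intros t Htt.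
    apply (is_derive_ext_eq (fun t => rz' z t / t) _ t ((rz'' z t * t - rz' z t * 1) / t ^ 2));
      [reflexivity | rewrite <- rz_ode by lra; field; lra |].
    apply (is_derive_div (rz' z) (fun x => x) t (rz'' z t) 1);
      [apply is_derive_rz'; auto; lra | apply (is_derive_id t) | lra].
  - intros t Htt. assert (0 <= rz z t) by (apply rz_nonneg; lra).
    apply Rdiv_le_0_compat; [apply Rmult_le_pos; [auto | apply pow2_ge_0] | lra].
Qed.

Lemma rz'_neg_somewhere : exists xi, 0 < xi /\ rz' z xi < 0.
Proof.
  assert (Hn1 := INR_n_ge1). assert (Hz := NO_z_C2).
  destruct (rz_small_at_infty (INR n / 2) ltac:(lra)) as [R1 [HR1 HR1']].
  destruct (rz_close_near0 R1 (INR n / 2) HR1 ltac:(lra)) as [al [Hal Haal]].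
  apply Rabs_def2 in Haal. specialize (HR1' R1 ltac:(lra)). apply Rabs_def2 in HR1'.
  destruct (MVT_is_derive (rz z) (rz' z) al R1) as [xi [Hxi Exi]];
    [lra | intros; apply is_derive_rz; auto; lra |].
  exists xi. split; [lra |].
  apply Rnot_le_lt. intros Hpos.
  assert (0 <= rz' z xi * (R1 - al)) by (apply Rmult_le_pos; lra). lra.
Qed.

(* With [b = a'(xi)/xi < 0], [a - b r^2/2] is nonincreasing on [(0, xi]] since [a'/r] is
   nondecreasing, and it tends to [n] at [0]. *)
Lemma rz_parabola_le_n xi r : 0 < xi -> 0 < r <= xi ->
  rz z r - rz' z xi / xi * r ^ 2 / 2 <= INR n.
Proof.
  intros Hxi Hr. assert (Hz := NO_z_C2).
  set (b := rz' z xi / xi).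
  assert (Hg : forall e, 0 < e <= r -> rz z r - b * r ^ 2 / 2 <= rz z e - b * e ^ 2 / 2).
  { intros e He.
    apply (decr_of_is_derive_nonpos (fun t => rz z t - b * t ^ 2 / 2) (fun t => rz' z t - b * t));
        [lra | |].
    - intros t Ht. apply (is_derive_minus_R (rz z) (fun t => b * t ^ 2 / 2));
        [apply is_derive_rz; auto; lra | auto_derive; [auto | simpl; field]].
    - intros t Ht. assert (Hm := rz'_div_incr t xi ltac:(lra)). fold b in Hm.
      assert (rz' z t = t * (rz' z t / t)) by (field; lra). nra. }
  apply Rnot_lt_le. intros Hc.
  set (eta := rz z r - b * r ^ 2 / 2 - INR n).
  assert (Heta : 0 < eta) by (unfold eta; lra).
  set (t1 := Rmin r (Rmin 1 (eta / (Rabs b + 1)))).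
  assert (Ht1 : 0 < t1 /\ t1 <= r /\ t1 <= 1 /\ t1 <= eta / (Rabs b + 1)).
  { assert (0 <= Rabs b) by apply Rabs_pos. split.
    - unfold t1. repeat apply Rmin_glb_lt; try lra. apply Rdiv_lt_0_compat; lra.
    - apply Rmin3_le. }
  destruct (rz_close_near0 t1 (eta / 2) ltac:(lra) ltac:(lra)) as [e [He Hae]].
  apply Rabs_def2 in Hae. specialize (Hg e ltac:(lra)).
  destruct Ht1 as [Ht1 [Ht1r [Ht1one Ht1e]]].
  assert (Hbt : (Rabs b + 1) * t1 <= eta).
  { apply (Rmult_le_compat_l (Rabs b + 1)) in Ht1e; [| assert (0 <= Rabs b) by apply Rabs_pos; lra].
    replace ((Rabs b + 1) * (eta / (Rabs b + 1))) with eta in Ht1e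
      by (field; assert (0 <= Rabs b) by apply Rabs_pos; lra). exact Ht1e. }
  assert (Hb : - b <= Rabs b) by (rewrite <- Rabs_Ropp; apply Rle_abs).
  assert (He2 : 0 <= e ^ 2 <= t1) by (split; [apply pow2_ge_0 | simpl; nra]).
  assert (- b * e ^ 2 <= Rabs b * t1).
  { apply Rle_trans with (Rabs b * e ^ 2); [apply Rmult_le_compat_r; lra |].
    apply Rmult_le_compat_l; [apply Rabs_pos | lra]. }
  unfold eta in *. nra.
Qed.

(* Beyond a point where [a' > 0], [a'/r] stays positive, so [a] could not decay at infinity. *)
Lemma rz_lt_n t : 0 < t -> rz z t < INR n.
Proof.
  intros Ht. assert (Hz := NO_z_C2).
  destruct rz'_neg_somewhere as [xi [Hxi Hxi']].
  assert (Hb : rz' z xi / xi < 0) by (apply Rdiv_neg_pos; lra).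
  assert (Hle : forall r, 0 < r <= xi -> rz z r < INR n).
  { intros r Hr. assert (H := rz_parabola_le_n xi r Hxi Hr).
    assert (0 < r ^ 2) by (apply pow_lt; lra). nra. }
  destruct (Rle_dec t xi) as [|Hgt]; [apply Hle; lra |]. apply Rnot_le_lt in Hgt.
  apply Rnot_le_lt. intros Hge.
  assert (Hxn := Hle xi ltac:(lra)).
  destruct (MVT_is_derive (rz z) (rz' z) xi t) as [et [Het Eet]];
    [lra | intros; apply is_derive_rz; auto; lra |].
  assert (Hpos : 0 < rz' z et / et).
  { apply Rdiv_lt_0_compat; [| lra].
    apply Rnot_le_lt. intros Hn0. assert (rz' z et * (t - xi) <= 0) by (apply Rmult_le_0_r; lra). lra. }
  assert (Hinc : forall w, et <= w -> 0 < rz' z w).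
  { intros w Hw. assert (Hm := rz'_div_incr et w ltac:(lra)).
    assert (rz' z w = w * (rz' z w / w)) by (field; lra). nra. }
  assert (Hp : 0 < rz z (et + 1)) by (apply rz_pos; lra).
  destruct (rz_small_at_infty (rz z (et + 1)) Hp) as [R2 [HR2 HR2']].
  set (w := Rmax R2 (et + 1)).
  specialize (HR2' w (Rmax_l _ _)). apply Rabs_def2 in HR2'.
  assert (rz z (et + 1) <= rz z w).
  { apply (incr_of_is_derive_nonneg (rz z) (rz' z)); [apply Rmax_r | |].
    - intros; apply is_derive_rz; auto; lra.
    - intros u Hu. left. apply Hinc. lra. }
  lra.
Qed.

Lemma n_sub_rz_ge_sq :
  exists c d, 0 < c /\ 0 < d /\ forall r, 0 < r < d -> c * r ^ 2 <= INR n - rz z r.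
Proof.
  destruct rz'_neg_somewhere as [xi [Hxi Hxi']].
  assert (Hb : rz' z xi / xi < 0) by (apply Rdiv_neg_pos; lra).
  exists (- (rz' z xi / xi) / 2), xi. repeat split; try lra.
  intros r Hr. assert (H := rz_parabola_le_n xi r Hxi ltac:(lra)). lra.
Qed.

Section Damped.

Variables (M R1 : R).
Hypotheses (HM : 0 < M) (HR1 : 0 < R1) (Hs_le : forall r, R1 <= r -> s r ^ 2 <= M ^ 2).

Let phi t := rz' z t + M * rz z t.

(* [(phi e^(-M t) / t)' = e^(-M t) / t * a (s^2 - M^2 - M/t)] by the equation for [a]. *)
Lemma rz_damped_weighted_decr t0 t : R1 <= t0 <= t ->
  phi t * (exp (- M * t) / t) <= phi t0 * (exp (- M * t0) / t0).
Proof.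
  intros Ht. assert (Hz := NO_z_C2).
  apply (decr_of_is_derive_nonpos (fun t => phi t * (exp (- M * t) / t))
    (fun t => exp (- M * t) / t * (rz z t * (s t ^ 2 - M ^ 2 - M / t)))); [lra | |].
  - intros w Hw.
    apply (is_derive_ext_eq (fun t => phi t * (exp (- M * t) / t)) _ w
      ((rz'' z w + M * rz' z w) * (exp (- M * w) / w)
       + phi w * ((- M * exp (- M * w) * w - exp (- M * w)) / w ^ 2))); [reflexivity | |].
    + assert (Hode := rz_ode w ltac:(lra)). unfold phi.
      replace (rz z w * (s w ^ 2 - M ^ 2 - M / w))
        with (rz'' z w - rz' z w / w - rz z w * (M ^ 2 + M / w)) by (rewrite Hode; field; lra).
      field. lra.
    + apply (is_derive_mult_R phi (fun t => exp (- M * t) / t)).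
      * unfold phi. apply is_derive_plus_R; [apply is_derive_rz'; auto; lra |].
        apply is_derive_scal, is_derive_rz; auto; lra.
      * auto_derive; [lra | field; lra].
  - intros w Hw. assert (0 <= rz z w) by (apply rz_nonneg; lra).
    specialize (Hs_le w ltac:(lra)).
    assert (0 < M / w) by (apply Rdiv_lt_0_compat; lra).
    assert (0 < exp (- M * w) / w) by (apply Rdiv_lt_0_compat; [apply exp_pos | lra]).
    assert (rz z w * (s w ^ 2 - M ^ 2 - M / w) <= 0) by nra. nra.
Qed.

(* If [phi t0 < 0] then [phi <= phi t0] afterwards, so [a] would decrease linearly below [0]. *)
Lemma rz_damped_nonneg t0 : R1 <= t0 -> 0 <= phi t0.
Proof.
  intros Ht0. assert (Hz := NO_z_C2).
  apply Rnot_lt_le. intros Hneg.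
  assert (Hphit : forall t, t0 <= t -> phi t <= phi t0).
  { intros t Ht. assert (Hw := rz_damped_weighted_decr t0 t ltac:(lra)).
    assert (1 <= exp (M * (t - t0))) by (assert (H := exp_ineq1_le (M * (t - t0))); nra).
    assert (1 <= t / t0) by (apply (Rmult_le_reg_r t0); [lra|]; unfold Rdiv;
        rewrite Rmult_assoc, Rinv_l; lra).
    assert (Hq : phi t <= phi t0 * (exp (M * (t - t0)) * (t / t0))).
    { assert (0 < exp (- M * t)) by apply exp_pos.
      apply Rmult_le_reg_r with (exp (- M * t) * / t); [apply Rmult_lt_0_compat; [auto |
          apply Rinv_0_lt_compat; lra]|].
      replace (phi t0 * (exp (M * (t - t0)) * (t / t0)) * (exp (- M * t) * / t)) with
        (phi t0 * (exp (- M * t0) / t0)); [unfold Rdiv in *; lra |].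
      replace (exp (- M * t0)) with (exp (M * (t - t0)) * exp (- M * t))
        by (rewrite <- exp_plus; f_equal; ring).
      field. split; lra. }
    assert (1 <= exp (M * (t - t0)) * (t / t0)) by nra. nra. }
  assert (Ha0 : 0 <= rz z t0) by (apply rz_nonneg; lra).
  set (T := (rz z t0 + 1) / (- phi t0)).
  assert (HT : 0 < T) by (unfold T; apply Rdiv_lt_0_compat; lra).
  assert (Hdec : rz z (t0 + T) - phi t0 * (t0 + T) <= rz z t0 - phi t0 * t0).
  { apply (decr_of_is_derive_nonpos (fun t => rz z t - phi t0 * t) (fun t => rz' z t - phi t0));
      [lra | |].
    - intros w Hw. apply (is_derive_ext_eq (fun t => rz z t + (- phi t0) * t)
        _ w (rz' z w + (- phi t0) * 1));
        [intros; ring | ring |].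
      apply is_derive_plus_R; [apply is_derive_rz; auto; lra | apply is_derive_scal, (is_derive_id w)].
    - intros w Hw. specialize (Hphit w ltac:(lra)).
      assert (0 <= rz z w) by (apply rz_nonneg; lra). unfold phi in *. nra. }
  assert (phi t0 * T = - (rz z t0 + 1)) by (unfold T; field; lra).
  assert (0 <= rz z (t0 + T)) by (apply rz_nonneg; lra).
  nra.
Qed.

Lemma rz_exp_lower_bound : exists c0, 0 < c0 /\ forall r, R1 <= r -> c0 * exp (- M * r) <= rz z r.
Proof.
  assert (Hz := NO_z_C2).
  exists (rz z R1 * exp (M * R1)). split; [apply Rmult_lt_0_compat; [apply rz_pos; lra |
      apply exp_pos]|].
  intros r Hr.
  assert (Hm : rz z R1 * exp (M * R1) <= rz z r * exp (M * r)).
  { apply (incr_of_is_derive_nonneg (fun t => rz z t * exp (M * t)) (fun t => phi t * exp (M * t)));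
      [lra | |].
    - intros w Hw. apply is_derive_mult_exp, is_derive_rz; auto; lra.
    - intros w Hw. apply Rmult_le_pos; [apply rz_damped_nonneg; lra | left; apply exp_pos]. }
  assert (Hx : exp (M * r) * exp (- M * r) = 1) by (rewrite <- exp_plus, <- exp_0; f_equal; ring).
  apply (Rmult_le_compat_r (exp (- M * r))) in Hm; [| left; apply exp_pos].
  replace (rz z r * exp (M * r) * exp (- M * r)) with (rz z r * (exp (M * r) * exp (- M * r)))
      in Hm by ring.
  rewrite Hx, Rmult_1_r in Hm. exact Hm.
Qed.

End Damped.

End Vortex.

(** * The flux of the W field *)

Definition W_flux (c g : R) (u v y s : R -> R) (t : R) :=
  - t * u t * v t * (g / 2 * s t ^ 2 + c * (2 * v t ^ 2)) / y t.

Definition W_flux_deriv (c g t u v y s zt : R) :=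
  let Q := g / 2 * s ^ 2 + c * (2 * v ^ 2) in
  t * u ^ 2 * ((2 * y ^ 2 + Q) * Q + 4 * c * v ^ 2 * y ^ 2) / y ^ 2
  + g * t * s ^ 2 * v ^ 2 * ((y - zt) * y) / y ^ 2.

(* On solutions, [W_flux = t v v' + 2 t v y u - t v^2 y' / y]; the left-hand side below is the
   derivative of that expression, simplified with the three equations. *)
Lemma W_flux_deriv_identity (c g t u u1 v v1 v2 y y1 y2 s zt : R) : t <> 0 -> y <> 0 ->
  v2 + v1 / t - v / t ^ 2 + 2 * (2 * y1 * u + y * u1 + / t * y * u) - c * (4 * v * u ^ 2)
      - g * v * s ^ 2 = 0 ->
  v1 * y - v * y1 + (2 * y ^ 2 + g / 2 * s ^ 2 + c * (2 * v ^ 2)) * u = 0 ->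
  y2 + y1 / t - y / t ^ 2 = g * zt * s ^ 2 ->
  v * v1 + t * v1 * v1 + t * v * v2 + 2 * (v * y * u + t * v1 * y * u + t * v * y1 * u + t * v * y * u1)
  - (v ^ 2 * y1 / y + t * (2 * v * v1) * y1 / y + t * v ^ 2 * y2 / y - t * v ^ 2 * y1 * y1 / y ^ 2)
  = W_flux_deriv c g t u v y s zt.
Proof.
  intros Ht Hy E1 E2 E3.
  assert (Hv2 : v2 = - (v1 / t - v / t ^ 2 + 2 * (2 * y1 * u + y * u1 + / t * y * u)
                        - c * (4 * v * u ^ 2) - g * v * s ^ 2)) by lra.
  assert (Hy2 : y2 = g * zt * s ^ 2 - y1 / t + y / t ^ 2) by lra.
  assert (Hv1 : v1 = (v * y1 - (2 * y ^ 2 + g / 2 * s ^ 2 + c * (2 * v ^ 2)) * u) / y)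
    by (field_simplify_eq; [lra | auto]).
  unfold W_flux_deriv. rewrite Hv2, Hy2, Hv1. field. auto.
Qed.

Lemma is_derive_W_flux (c g : R) (u v y s : R -> R) (zt t : R) :
  0 < t ->
  (forall w, 0 < w -> ex_derive u w /\ ex_derive v w /\ ex_derive (Derive v) w /\
     ex_derive y w /\ ex_derive (Derive y) w /\ y w <> 0 /\
     Derive v w * y w - v w * Derive y w
       + (2 * y w ^ 2 + g / 2 * s w ^ 2 + c * (2 * v w ^ 2)) * u w = 0) ->
  Derive (Derive v) t + Derive v t / t - v t / t ^ 2
      + 2 * (2 * Derive y t * u t + y t * Derive u t + / t * y t * u t)
      - c * (4 * v t * u t ^ 2) - g * v t * s t ^ 2 = 0 ->
  Derive (Derive y) t + Derive y t / t - y t / t ^ 2 = g * zt * s t ^ 2 ->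
  is_derive (W_flux c g u v y s) t (W_flux_deriv c g t (u t) (v t) (y t) (s t) zt).
Proof.
  intros Ht Hall E1 E3.
  destruct (Hall t Ht) as [Hu [Hv [Hv' [Hy [Hy' [Hy0 E2]]]]]].
  eapply (is_derive_ext_ball
    (fun w => (w * v w * Derive v w + 2 * w * v w * y w * u w) - w * v w ^ 2 * Derive y w / y w)
    (W_flux c g u v y s) t _ _ (t / 2)).
  - lra.
  - intros w Hw. apply Rabs_def2 in Hw.
    destruct (Hall w ltac:(lra)) as [_ [_ [_ [_ [_ [Hyw E2w]]]]]].
    assert (Hv1 : Derive v w = (v w * Derive y w
      - (2 * y w ^ 2 + g / 2 * s w ^ 2 + c * (2 * v w ^ 2)) * u w) / y w)
      by (field_simplify_eq; [lra | auto]).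
    unfold W_flux. rewrite Hv1. field. auto.
  - apply W_flux_deriv_identity; eauto; lra.
  - auto_derive.
    + eta_fix. repeat split; auto.
    + eta_fix. field. auto.
Qed.

Lemma W_flux_deriv_nonneg (c g t u v y s zt : R) : 0 < t -> 0 < g -> 0 <= c -> y <> 0 ->
  0 <= (y - zt) * y -> 0 <= W_flux_deriv c g t u v y s zt.
Proof.
  intros Ht Hg Hc Hy Hxy. unfold W_flux_deriv; cbv zeta.
  assert (Hy2 : 0 < y ^ 2) by (apply pow2_gt_0; auto).
  assert (0 <= s ^ 2) by apply pow2_ge_0. assert (0 <= v ^ 2) by apply pow2_ge_0.
  assert (0 <= u ^ 2) by apply pow2_ge_0.
  set (Q := g / 2 * s ^ 2 + c * (2 * v ^ 2)).
  assert (HQ : 0 <= Q) by (apply Rplus_le_le_0_compat; apply Rmult_le_pos; lra).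
  assert (0 <= (2 * y ^ 2 + Q) * Q) by (apply Rmult_le_pos; lra).
  assert (0 <= 4 * c * v ^ 2 * y ^ 2)
    by (apply Rmult_le_pos; [apply Rmult_le_pos; [apply Rmult_le_pos |] |]; lra).
  assert (0 <= g * t * s ^ 2 * v ^ 2)
    by (apply Rmult_le_pos; [apply Rmult_le_pos; [apply Rmult_le_pos |] |]; lra).
  assert (0 <= t * u ^ 2) by (apply Rmult_le_pos; lra).
  apply Rplus_le_le_0_compat; apply Rdiv_le_0_compat; try lra; apply Rmult_le_pos; lra.
Qed.

Lemma W_flux_deriv_eq0 (c g t u v y s zt : R) : 0 < t -> 0 < g -> 0 <= c -> y <> 0 ->
  0 <= (y - zt) * y -> W_flux_deriv c g t u v y s zt = 0 ->
  (u = 0 \/ s = 0) /\ s ^ 2 * v ^ 2 * ((y - zt) * y) = 0.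
Proof.
  intros Ht Hg Hc Hy Hxy H0. unfold W_flux_deriv in H0; cbv zeta in H0.
  assert (Hy2 : 0 < y ^ 2) by (apply pow2_gt_0; auto).
  assert (Hs2 : 0 <= s ^ 2) by apply pow2_ge_0. assert (Hv2 : 0 <= v ^ 2) by apply pow2_ge_0.
  assert (Hu2 : 0 <= u ^ 2) by apply pow2_ge_0.
  set (S := g / 2 * s ^ 2) in *.
  assert (HS : 0 <= S) by (unfold S; apply Rmult_le_pos; lra).
  set (Q := S + c * (2 * v ^ 2)) in *.
  assert (HQ : S <= Q) by (unfold Q; assert (0 <= c * (2 * v ^ 2)) by (apply Rmult_le_pos; lra); lra).
  set (A := t * u ^ 2 * ((2 * y ^ 2 + Q) * Q + 4 * c * v ^ 2 * y ^ 2)) in *.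
  set (B := g * t * s ^ 2 * v ^ 2 * ((y - zt) * y)) in *.
  assert (HSA : t * u ^ 2 * (S * S) <= A).
  { unfold A. apply Rmult_le_compat_l; [apply Rmult_le_pos; lra |].
    assert (0 <= 4 * c * v ^ 2 * y ^ 2)
      by (apply Rmult_le_pos; [apply Rmult_le_pos; [apply Rmult_le_pos |] |]; lra).
    nra. }
  assert (HA0 : 0 <= t * u ^ 2 * (S * S)) by (apply Rmult_le_pos; [apply Rmult_le_pos |]; nra).
  assert (HB0 : 0 <= B)
    by (unfold B; apply Rmult_le_pos; [apply Rmult_le_pos; [apply Rmult_le_pos;
        [apply Rmult_le_pos |] |] |]; lra).
  assert (HAB : A / y ^ 2 = 0 /\ B / y ^ 2 = 0).
  { assert (0 <= A / y ^ 2) by (apply Rdiv_le_0_compat; lra).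
    assert (0 <= B / y ^ 2) by (apply Rdiv_le_0_compat; lra). lra. }
  destruct HAB as [HA HB].
  assert (Hiy : / y ^ 2 <> 0) by (apply Rinv_neq_0_compat; lra).
  apply Rmult_integral in HA. destruct HA as [HA | HA]; [| contradiction].
  apply Rmult_integral in HB. destruct HB as [HB | HB]; [| contradiction].
  split.
  - assert (Hz : t * u ^ 2 * (S * S) = 0) by lra.
    apply Rmult_integral in Hz. destruct Hz as [Hz | Hz].
    + apply Rmult_integral in Hz. destruct Hz as [Hz | Hz]; [lra | left; apply pow2_eq_0; auto].
    + right. apply Rmult_integral in Hz. unfold S in Hz.
      destruct Hz as [Hz | Hz]; apply Rmult_integral in Hz; destruct Hz as [Hz | Hz];
        try lra; apply pow2_eq_0; auto.
  - unfold B in HB.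
    replace (g * t * s ^ 2 * v ^ 2 * ((y - zt) * y))
      with ((g * t) * (s ^ 2 * v ^ 2 * ((y - zt) * y))) in HB by ring.
    apply Rmult_integral in HB. destruct HB as [HB | HB]; [nra | exact HB].
Qed.

Lemma W_flux_deriv_ge (g t u v y s zt : R) : 0 < t -> 0 < g -> y <> 0 -> 0 <= (y - zt) * y ->
  4 * t * u ^ 2 * v ^ 4 / y ^ 2 <= W_flux_deriv 1 g t u v y s zt.
Proof.
  intros Ht Hg Hy Hxy. unfold W_flux_deriv; cbv zeta.
  assert (Hy2 : 0 < y ^ 2) by (apply pow2_gt_0; auto).
  assert (Hs2 : 0 <= s ^ 2) by apply pow2_ge_0. assert (Hv2 : 0 <= v ^ 2) by apply pow2_ge_0.
  assert (Hu2 : 0 <= u ^ 2) by apply pow2_ge_0.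
  set (Q := g / 2 * s ^ 2 + 1 * (2 * v ^ 2)).
  assert (0 <= g / 2 * s ^ 2) by (apply Rmult_le_pos; lra).
  assert (HQ : 2 * v ^ 2 <= Q) by (unfold Q; lra).
  assert (HPQ : 4 * v ^ 4 <= (2 * y ^ 2 + Q) * Q).
  { replace (4 * v ^ 4) with ((2 * v ^ 2) * (2 * v ^ 2)) by ring. apply Rmult_le_compat; lra. }
  assert (H4 : 0 <= 4 * 1 * v ^ 2 * y ^ 2) by (apply Rmult_le_pos; [apply Rmult_le_pos|]; lra).
  assert (HB : 0 <= g * t * s ^ 2 * v ^ 2 * ((y - zt) * y) / y ^ 2).
  { apply Rdiv_le_0_compat; [| lra].
    apply Rmult_le_pos; [apply Rmult_le_pos; [apply Rmult_le_pos; [apply Rmult_le_pos|]|]|]; lra. }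
  enough (4 * t * u ^ 2 * v ^ 4 / y ^ 2
          <= t * u ^ 2 * ((2 * y ^ 2 + Q) * Q + 4 * 1 * v ^ 2 * y ^ 2) / y ^ 2)
    by lra.
  unfold Rdiv. apply Rmult_le_compat_r; [left; apply Rinv_0_lt_compat; lra |].
  replace (4 * t * u ^ 2 * v ^ 4) with (t * u ^ 2 * (4 * v ^ 4)) by ring.
  apply Rmult_le_compat_l; [apply Rmult_le_pos; lra | lra].
Qed.

Lemma W_flux_abs_le (c g : R) (u v y s : R -> R) t B P Q :
  0 < t -> 0 <= c -> 0 < g -> 0 < B -> B <= Rabs (t * y t) ->
  Rabs (u t) * Rabs (v t) <= P -> g / 2 * s t ^ 2 + c * (2 * v t ^ 2) <= Q ->
  Rabs (W_flux c g u v y s t) * B <= t ^ 2 * P * Q.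
Proof.
  intros Ht Hc Hg HB Hy Huv HQ.
  assert (Hy0 : y t <> 0) by (intros H0; rewrite H0, Rmult_0_r, Rabs_R0 in Hy; lra).
  assert (HQ0 : 0 <= g / 2 * s t ^ 2 + c * (2 * v t ^ 2)).
  { assert (0 <= s t ^ 2) by apply pow2_ge_0. assert (0 <= v t ^ 2) by apply pow2_ge_0.
    apply Rplus_le_le_0_compat; apply Rmult_le_pos; lra. }
  assert (Habs : Rabs (W_flux c g u v y s t) * Rabs (t * y t)
    = t ^ 2 * (Rabs (u t) * Rabs (v t)) * (g / 2 * s t ^ 2 + c * (2 * v t ^ 2))).
  { unfold W_flux. rewrite <- Rabs_mult.
    replace (- t * u t * v t * (g / 2 * s t ^ 2 + c * (2 * v t ^ 2)) / y t * (t * y t))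
      with (- (t ^ 2 * (u t * v t) * (g / 2 * s t ^ 2 + c * (2 * v t ^ 2)))) by (field; auto).
    rewrite Rabs_Ropp, !Rabs_mult, (Rabs_pos_eq (t ^ 2)), (Rabs_pos_eq (_ + _)) by (auto;
        apply pow2_ge_0).
    ring. }
  assert (0 <= Rabs (u t) * Rabs (v t)) by (apply Rmult_le_pos; apply Rabs_pos).
  apply Rle_trans with (Rabs (W_flux c g u v y s t) * Rabs (t * y t));
    [apply Rmult_le_compat_l; [apply Rabs_pos | auto] |].
  rewrite Habs. apply Rmult_le_compat; auto.
  - apply Rmult_le_pos; [apply pow2_ge_0 | auto].
  - apply Rmult_le_compat_l; [apply pow2_ge_0 | auto].
Qed.

Lemma decays_W_le1 g f : 0 < g -> decays_W g f -> exists R0, forall t, R0 <= t -> Rabs (f t) <= 1.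
Proof.
  intros Hg [C [p [R1 [HR1 Hf]]]].
  assert (Hsg : 0 < sqrt g) by (apply sqrt_lt_R0; lra).
  assert (HC : 0 <= Rabs C) by apply Rabs_pos.
  destruct (Rpower_exp_small_at_infty p (sqrt g) Hsg (1 / (Rabs C + 1))) as [R2 HR2];
    [apply Rdiv_lt_0_compat; lra |].
  exists (Rmax R1 R2). intros t Ht.
  specialize (Hf t (Rle_trans _ _ _ (Rmax_l _ _) Ht)).
      specialize (HR2 t (Rle_trans _ _ _ (Rmax_r _ _) Ht)).
  assert (0 < Rpower t p * exp (- sqrt g * t))
    by (apply Rmult_lt_0_compat; [apply Rpower_pos | apply exp_pos]).
  assert (C <= Rabs C) by apply Rle_abs.
  apply (Rmult_lt_compat_l (Rabs C + 1)) in HR2; [| lra].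
  replace ((Rabs C + 1) * (1 / (Rabs C + 1))) with 1 in HR2 by (field; lra).
  rewrite Rmult_assoc in Hf. nra.
Qed.

Lemma decays_W_mult g u v : decays_W g u -> decays_W g v ->
  exists C p R0, 0 < R0 /\ 0 <= C /\ forall t, R0 <= t ->
    Rabs (u t) * Rabs (v t) <= C * (Rpower t p * exp (- (2 * sqrt g) * t)).
Proof.
  intros [Cu [pu [Ru [HRu Hu]]]] [Cv [pv [Rv [HRv Hv]]]].
  exists (Rabs Cu * Rabs Cv), (pu + pv), (Rmax Ru Rv).
  split; [apply (Rlt_le_trans _ _ _ HRu (Rmax_l _ _)) |].
  split; [apply Rmult_le_pos; apply Rabs_pos |].
  intros t Ht.
  specialize (Hu t (Rle_trans _ _ _ (Rmax_l _ _) Ht)).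
      specialize (Hv t (Rle_trans _ _ _ (Rmax_r _ _) Ht)).
  assert (Hw : forall C p, C * Rpower t p * exp (- sqrt g * t)
      <= Rabs C * (Rpower t p * exp (- sqrt g * t))).
  { intros C p. rewrite Rmult_assoc. apply Rmult_le_compat_r; [| apply Rle_abs].
    left. apply Rmult_lt_0_compat; [apply Rpower_pos | apply exp_pos]. }
  replace (Rabs Cu * Rabs Cv * (Rpower t (pu + pv) * exp (- (2 * sqrt g) * t)))
    with ((Rabs Cu * (Rpower t pu * exp (- sqrt g * t)))
        * (Rabs Cv * (Rpower t pv * exp (- sqrt g * t))))
    by (rewrite Rpower_plus; replace (- (2 * sqrt g) * t) with (- sqrt g * t + - sqrt g * t) by ring;
        rewrite exp_plus; ring).
  apply Rmult_le_compat; try apply Rabs_pos; eapply Rle_trans; eauto.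
Qed.

(* [|F| |t y| = t^2 |u v| Q] with [Q] bounded, [|u v| = O(t^p e^(-2 sqrt g t))] and
   [|t y| >= kap e^(-th t)], [th < 2 sqrt g]. *)
Lemma W_flux_small_at_infty (c g : R) (u v y s : R -> R) Rs Ry kap th :
  0 <= c <= 1 -> 0 < g -> 0 < kap -> 0 <= th < 2 * sqrt g ->
  decays_W g u -> decays_W g v ->
  (forall t, Rs <= t -> Rabs (s t) <= 3/2) ->
  (forall t, Ry <= t -> kap * exp (- th * t) <= Rabs (t * y t)) ->
  forall e, 0 < e -> exists R1, 0 < R1 /\ forall t, R1 <= t -> Rabs (W_flux c g u v y s t) < e.
Proof.
  intros Hc Hg Hk Hth Hu Hv Hs Hy e He.
  destruct (decays_W_le1 g v Hg Hv) as [Rv Hv1].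
  destruct (decays_W_mult g u v Hu Hv) as [C [p [Ruv [HRuv [HC Huv]]]]].
  set (Qm := g * (9/8) + 2).
  set (A := C * Qm / kap).
  assert (HA : 0 <= A) by (unfold A, Qm; apply Rdiv_le_0_compat; [apply Rmult_le_pos |]; lra).
  destruct (Rpower_exp_small_at_infty (2 + p) (2 * sqrt g - th) ltac:(lra) (e / (A + 1)))
    as [Re HRe]; [apply Rdiv_lt_0_compat; lra |].
  set (R1 := Rmax 1 (Rmax Ruv (Rmax Rs (Rmax Ry (Rmax Rv Re))))).
  assert (HR1 : 1 <= R1 /\ Ruv <= R1 /\ Rs <= R1 /\ Ry <= R1 /\ Rv <= R1 /\ Re <= R1).
  { unfold R1. repeat split;
      repeat (first [apply Rle_refl | apply Rmax_l | eapply Rle_trans; [|apply Rmax_r]]). }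
  exists R1. split; [lra |]. intros t Ht.
  specialize (Huv t ltac:(lra)). specialize (Hv1 t ltac:(lra)). specialize (Hs t ltac:(lra)).
  specialize (Hy t ltac:(lra)). specialize (HRe t ltac:(lra)).
  assert (Hexp : 0 < exp (- th * t)) by apply exp_pos.
  assert (HQ : g / 2 * s t ^ 2 + c * (2 * v t ^ 2) <= Qm).
  { apply pow2_le_of_Rabs_le in Hs. apply pow2_le_of_Rabs_le in Hv1.
    assert (0 <= v t ^ 2) by apply pow2_ge_0. unfold Qm. nra. }
  assert (Hmain := W_flux_abs_le c g u v y s t (kap * exp (- th * t)) _ Qm ltac:(lra) ltac:(lra) Hg
    ltac:(nra) Hy Huv HQ).
  replace (t ^ 2 * (C * (Rpower t p * exp (- (2 * sqrt g) * t))) * Qm)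
    with (A * (kap * exp (- th * t)) * (Rpower t (2 + p) * exp (- (2 * sqrt g - th) * t))) in Hmain
    by (unfold A; rewrite Rpower_plus, Rpower_2 by lra;
        replace (- (2 * sqrt g) * t) with (- th * t + - (2 * sqrt g - th) * t) by ring;
        rewrite exp_plus; field; lra).
  assert (Hk2 : 0 < kap * exp (- th * t)) by nra.
  assert (Hb : Rabs (W_flux c g u v y s t) <= A * (Rpower t (2 + p) * exp (- (2 * sqrt g - th) * t))).
  { apply (Rmult_le_reg_r (kap * exp (- th * t))); auto. nra. }
  assert (0 < Rpower t (2 + p) * exp (- (2 * sqrt g - th) * t))
    by (apply Rmult_lt_0_compat; [apply Rpower_pos | apply exp_pos]).
  apply (Rmult_lt_compat_l (A + 1)) in HRe; [| lra].
  replace ((A + 1) * (e / (A + 1))) with e in HRe by (field; lra). nra.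
Qed.

Lemma W_flux_bound_near0 (c g : R) (u v y s : R -> R) (n : nat) k u0 v0 Cs rho j d0 :
  0 <= c -> 0 < g -> 0 < rho ->
  (forall t, 0 < t < d0 -> Rabs (u t) <= 2 * Rabs u0 * Rpower t k) ->
  (forall t, 0 < t < d0 -> Rabs (v t) <= 2 * Rabs v0 * Rpower t k) ->
  (forall t, 0 < t < d0 -> Rabs (s t) <= Cs * t ^ n) ->
  (forall t, 0 < t < d0 -> rho * Rpower t j <= Rabs (t * y t)) ->
  forall t, 0 < t < d0 -> Rabs (W_flux c g u v y s t) <=
    (4 * Rabs u0 * Rabs v0 * (g / 2) * Cs ^ 2 / rho) * Rpower t (2 - j + 2 * k + 2 * INR n)
    + (32 * c * Rabs u0 * Rabs v0 * v0 ^ 2 / rho) * Rpower t (2 - j + 4 * k).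
Proof.
  intros Hc Hg Hrho Hu Hv Hs Hy t Ht.
  specialize (Hu t Ht). specialize (Hv t Ht). specialize (Hs t Ht). specialize (Hy t Ht).
  assert (Hpj : 0 < Rpower t j) by apply Rpower_pos.
  assert (Hpk : 0 < Rpower t k) by apply Rpower_pos.
  assert (Hs2 : s t ^ 2 <= Cs ^ 2 * Rpower t (2 * INR n)).
  { rewrite <- Rpower_sqr, Rpower_pow, <- Rpow_mult_distr by lra. apply pow2_le_of_Rabs_le, Hs. }
  assert (Hv2 : v t ^ 2 <= 4 * v0 ^ 2 * Rpower t (2 * k)).
  { rewrite <- Rpower_sqr by lra.
    replace (4 * v0 ^ 2 * Rpower t k ^ 2) with ((2 * Rabs v0 * Rpower t k) ^ 2)
      by (rewrite !Rpow_mult_distr, pow2_abs; ring).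
    apply pow2_le_of_Rabs_le, Hv. }
  assert (HQ : g / 2 * s t ^ 2 + c * (2 * v t ^ 2)
    <= g / 2 * (Cs ^ 2 * Rpower t (2 * INR n)) + c * (2 * (4 * v0 ^ 2 * Rpower t (2 * k)))).
  { apply Rplus_le_compat; apply Rmult_le_compat_l; lra. }
  assert (Huv : Rabs (u t) * Rabs (v t) <= 4 * Rabs u0 * Rabs v0 * Rpower t (2 * k)).
  { rewrite <- Rpower_sqr by lra.
    replace (4 * Rabs u0 * Rabs v0 * Rpower t k ^ 2)
      with ((2 * Rabs u0 * Rpower t k) * (2 * Rabs v0 * Rpower t k)) by ring.
    apply Rmult_le_compat; try apply Rabs_pos; auto. }
  assert (Hmain := W_flux_abs_le c g u v y s t (rho * Rpower t j) _ _ ltac:(lra) Hc Hg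
    ltac:(nra) Hy Huv HQ).
  apply (Rmult_le_reg_r (rho * Rpower t j)); [nra |].
  eapply Rle_trans; [exact Hmain |]. right.
  rewrite <- Rpower_2 by lra.
  assert (E1 : Rpower t (2 - j + 2 * k + 2 * INR n) * Rpower t j
             = Rpower t 2 * Rpower t (2 * k) * Rpower t (2 * INR n))
    by (rewrite <- !Rpower_plus; f_equal; ring).
  assert (E2 : Rpower t (2 - j + 4 * k) * Rpower t j = Rpower t 2 * Rpower t (2 * k) * Rpower t (2 * k))
    by (rewrite <- !Rpower_plus; f_equal; ring).
  transitivity ((4 * Rabs u0 * Rabs v0 * (g / 2) * Cs ^ 2)
                  * (Rpower t (2 - j + 2 * k + 2 * INR n) * Rpower t j)
     + (32 * c * Rabs u0 * Rabs v0 * v0 ^ 2) * (Rpower t (2 - j + 4 * k) * Rpower t j)).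
  - rewrite E1, E2. ring.
  - field. lra.
Qed.

Lemma quartic_ratio_lower t k U V Y u0 v0 Cy : 0 < t -> 0 < Cy -> Y <> 0 ->
  Rabs u0 / 2 * Rpower t k <= Rabs U -> Rabs v0 / 2 * Rpower t k <= Rabs V ->
  Rabs (t * Y) <= Cy * t ^ 2 ->
  u0 ^ 2 * v0 ^ 4 / (16 * Cy ^ 2) * Rpower t (6 * k) / t <= 4 * t * U ^ 2 * V ^ 4 / Y ^ 2.
Proof.
  intros Ht HCy HY Hu Hv Hy.
  assert (Hpk : 0 < Rpower t k) by apply Rpower_pos.
  assert (Hu2 : u0 ^ 2 / 4 * Rpower t (2 * k) <= U ^ 2).
  { rewrite <- Rpower_sqr by lra.
    replace (u0 ^ 2 / 4 * Rpower t k ^ 2) with ((Rabs u0 / 2 * Rpower t k) ^ 2)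
      by (unfold Rdiv; rewrite !Rpow_mult_distr, pow2_abs; field).
    apply pow2_ge_of_Rabs_ge; [| exact Hu].
    apply Rmult_le_pos; [apply Rdiv_le_0_compat; [apply Rabs_pos | lra] | lra]. }
  assert (Hv4 : (v0 ^ 2 / 4 * Rpower t (2 * k)) ^ 2 <= (V ^ 2) ^ 2).
  { apply pow2_ge_of_Rabs_ge; [apply Rmult_le_pos; [nra | left; apply Rpower_pos] |].
    rewrite Rabs_pos_eq by apply pow2_ge_0.
    rewrite <- Rpower_sqr by lra.
    replace (v0 ^ 2 / 4 * Rpower t k ^ 2) with ((Rabs v0 / 2 * Rpower t k) ^ 2)
      by (unfold Rdiv; rewrite !Rpow_mult_distr, pow2_abs; field).
    apply pow2_ge_of_Rabs_ge; [| exact Hv].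
    apply Rmult_le_pos; [apply Rdiv_le_0_compat; [apply Rabs_pos | lra] | lra]. }
  assert (Hyy : Y ^ 2 <= (Cy * t) ^ 2).
  { apply pow2_le_of_Rabs_le. rewrite Rabs_mult, (Rabs_pos_eq t) in Hy by lra.
    apply (Rmult_le_reg_l t); [lra |]. simpl in Hy |- *. lra. }
  assert (HY2 : 0 < Y ^ 2) by (apply pow2_gt_0; auto).
  set (N := u0 ^ 2 / 4 * Rpower t (2 * k) * (v0 ^ 2 / 4 * Rpower t (2 * k)) ^ 2).
  assert (Hu0 : 0 <= u0 ^ 2 / 4 * Rpower t (2 * k))
    by (apply Rmult_le_pos; [nra | left; apply Rpower_pos]).
  assert (HN : 0 <= N) by (unfold N; apply Rmult_le_pos; [exact Hu0 | apply pow2_ge_0]).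
  assert (HNuv : N <= U ^ 2 * (V ^ 2) ^ 2)
    by (unfold N; apply Rmult_le_compat; auto; apply pow2_ge_0).
  transitivity (4 * t * N / (Cy * t) ^ 2).
  - right. unfold N.
    replace (Rpower t (6 * k)) with (Rpower t (2 * k) * Rpower t (2 * k) * Rpower t (2 * k))
      by (rewrite <- !Rpower_plus; f_equal; ring).
    field. lra.
  - replace (4 * t * U ^ 2 * V ^ 4 / Y ^ 2) with (4 * t * (U ^ 2 * (V ^ 2) ^ 2) / Y ^ 2)
      by (field; auto).
    unfold Rdiv. apply Rle_trans with (4 * t * N * / Y ^ 2).
    + apply Rmult_le_compat_l; [nra | apply Rinv_le_contravar; lra].
    + apply Rmult_le_compat_r; [left; apply Rinv_0_lt_compat; lra | nra].
Qed.

Lemma Rpower_ln_deriv_le k t : 0 < t ->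
  Rpower t (4 * k) * (4 * k * ln t + 1) / t <= 2 * Rpower t (6 * k) / t.
Proof.
  intros Ht.
  assert (Hx := exp_ineq1_le (2 * k * ln t)).
  assert (H6 : Rpower t (6 * k) = Rpower t (4 * k) * exp (2 * k * ln t))
    by (unfold Rpower; rewrite <- exp_plus; f_equal; ring).
  assert (0 < Rpower t (4 * k)) by apply Rpower_pos.
  assert (0 < / t) by (apply Rinv_0_lt_compat; lra).
  rewrite H6. unfold Rdiv. apply Rmult_le_compat_r; [lra | nra].
Qed.

(* [F' >= kap t^(6k-1) >= kap/2 (t^(4k) ln t)'] while [F = O(t^(4k))]; integrating from [e] to
   [d0/2], the term [-t^(4k) ln e] wins as [e -> 0], contradicting [F <= 0]. *)
Lemma log_barrier_false (F Fd : R -> R) k kap A d0 :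
  k <= 0 -> 0 < kap -> 0 <= A -> 0 < d0 <= 1 ->
  (forall t, 0 < t < d0 -> Rabs (F t) <= A * Rpower t (4 * k)) ->
  (forall t, 0 < t < d0 -> F t <= 0) ->
  (forall t, 0 < t < d0 -> is_derive F t (Fd t)) ->
  (forall t, 0 < t < d0 -> kap * Rpower t (6 * k) / t <= Fd t) ->
  False.
Proof.
  intros Hk Hkap HA Hd0 HF HFle HFd HFdb.
  set (G := fun t => Rpower t (4 * k) * ln t).
  set (G' := fun t => Rpower t (4 * k) * (4 * k * ln t + 1) / t).
  assert (HG : forall t, 0 < t -> is_derive G t (G' t)).
  { intros t Ht. unfold G, G', Rpower. auto_derive; [auto | field; lra]. }
  assert (HG' : forall t, 0 < t < d0 -> kap / 2 * G' t <= Fd t).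
  { intros t Ht. specialize (HFdb t Ht). assert (H := Rpower_ln_deriv_le k t ltac:(lra)).
    unfold G'. unfold Rdiv in *. nra. }
  set (r0 := d0 / 2).
  set (X := 2 / kap * (A + 1 + kap / 2 * Rabs (G r0))).
  set (e := Rmin (r0 / 2) (exp (- X))).
  assert (He : 0 < e /\ e <= r0 / 2 /\ e <= exp (- X)).
  { unfold e. split; [apply Rmin_glb_lt; [unfold r0; lra | apply exp_pos] |].
    split; [apply Rmin_l | apply Rmin_r]. }
  assert (Hlne : ln e <= - X) by (rewrite <- (ln_exp (- X)); apply ln_le; lra).
  assert (Hmon : F e - kap / 2 * G e <= F r0 - kap / 2 * G r0).
  { apply (incr_of_is_derive_nonneg (fun t => F t - kap / 2 * G t) (fun t => Fd t - kap / 2 * G' t));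
      [unfold r0 in *; lra | |].
    - intros t Ht. apply is_derive_minus_R; [apply HFd; unfold r0 in *; lra |].
      apply is_derive_scal, HG. lra.
    - intros t Ht. specialize (HG' t ltac:(unfold r0 in *; lra)). lra. }
  assert (HFe : - (A * Rpower e (4 * k)) <= F e)
    by (specialize (HF e ltac:(unfold r0 in *; lra)); assert (H := Rle_abs (- F e));
        rewrite Rabs_Ropp in H; lra).
  assert (Hpe : 1 <= Rpower e (4 * k)).
  { unfold Rpower. assert (H := exp_ineq1_le (4 * k * ln e)). 
    assert (ln e <= 0) by (rewrite <- ln_1; apply ln_le; unfold r0 in *; lra). nra. }
  assert (HFr0 : F r0 <= 0) by (apply HFle; unfold r0; lra).
  assert (HGr : - Rabs (G r0) <= G r0) by (assert (H := Rle_abs (- G r0)); rewrite Rabs_Ropp in H; lra).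
  assert (Hb : kap / 2 * (- ln e) - A >= 1 + kap / 2 * Rabs (G r0)).
  { assert (kap / 2 * X = A + 1 + kap / 2 * Rabs (G r0)) by (unfold X; field; lra).
    assert (kap / 2 * (- ln e) >= kap / 2 * X) by (apply Rle_ge, Rmult_le_compat_l; lra). lra. }
  assert (0 <= kap / 2 * Rabs (G r0)) by (apply Rmult_le_pos; [lra | apply Rabs_pos]).
  assert (Rpower e (4 * k) * (kap / 2 * (- ln e) - A) >= 1 + kap / 2 * Rabs (G r0)) by nra.
  assert (HGe : G e = Rpower e (4 * k) * ln e) by reflexivity.
  rewrite HGe in Hmon. nra.
Qed.

(** * The auxiliary field y *)

Definition aux_num gamma n m := 2 * gamma * INR n + IZR m.

Lemma r_aux_y gamma n m (z : R -> R) t : 0 < t ->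
  t * aux_y gamma n m z t = gamma * rz z t - aux_num gamma n m / 2.
Proof. intros Ht. unfold aux_y, rz, aux_num. field. lra. Qed.

Lemma r_aux_y_sub_z gamma n m (z : R -> R) t : 0 < t ->
  t * (aux_y gamma n m z t - z t) = (gamma - 1) * rz z t - aux_num gamma n m / 2.
Proof. intros Ht. unfold aux_y, rz, aux_num. field. lra. Qed.

Section AuxY.

Variables (gamma : R) (n : nat) (m : Z) (z : R -> R).
Hypothesis Hz : C2_pos z.

Let y := aux_y gamma n m z.

Lemma is_derive_aux_y t : 0 < t ->
  is_derive y t (gamma * Derive z t + aux_num gamma n m / (2 * t ^ 2)).
Proof.
  intros Ht. destruct (Hz t Ht) as [H1 H2]. unfold y, aux_y, aux_num.
  auto_derive; eta_fix; [repeat split; auto; lra | field; lra].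
Qed.

Lemma is_derive_Derive_aux_y t : 0 < t ->
  is_derive (Derive y) t (gamma * Derive (Derive z) t - aux_num gamma n m / t ^ 3).
Proof.
  intros Ht. destruct (Hz t Ht) as [H1 H2].
  apply (is_derive_ext_ball (fun w => gamma * Derive z w + aux_num gamma n m / (2 * w ^ 2)) _ t
     (gamma * Derive (Derive z) t + aux_num gamma n m * (- (2 * (2 * t)) / (2 * t ^ 2) ^ 2)) _ (t / 2)).
  - lra.
  - intros x Hx. apply Rabs_def2 in Hx. symmetry. apply is_derive_unique, is_derive_aux_y. lra.
  - field; lra.
  - auto_derive; eta_fix; [repeat split; auto; apply Rgt_not_eq; nra | field; lra].
Qed.

Lemma aux_y_C2 : C2_pos y.
Proof. intros t Ht. split; eexists; [apply is_derive_aux_y | apply is_derive_Derive_aux_y]; auto. Qed.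

Lemma aux_y_ode beta s t : NO_profile n beta s z -> 0 < t ->
  Derive (Derive y) t + Derive y t / t - y t / t ^ 2 = gamma * z t * s t ^ 2.
Proof.
  intros HNO Ht. assert (Hzo := NO_z_ode n beta s z HNO t Ht).
  rewrite (is_derive_unique _ _ _ (is_derive_Derive_aux_y t Ht)),
    (is_derive_unique _ _ _ (is_derive_aux_y t Ht)).
  unfold y, aux_y. fold (aux_num gamma n m).
  replace (gamma * z t * s t ^ 2) with (gamma * (Derive (Derive z)
      t + Derive z t / t - z t / t ^ 2)) by nra.
  field. lra.
Qed.

End AuxY.

Section Signs.

Variables (n : nat) (m : Z) (beta gamma : R) (s z : R -> R).
Hypotheses (Hn : (1 <= n)%nat) (HNO : NO_profile n beta s z) (Hg : 0 < gamma) (Hg1 : gamma <= 1).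
Hypothesis Hcase : 1 <= IZR m \/ IZR m = 0 \/ IZR m <= -2 * INR n.

Let y := aux_y gamma n m z.

Lemma r_aux_y_sign t : 0 < t ->
  t * y t <> 0 /\ 0 <= t * y t * (t * (y t - z t)) /\ (IZR m = 0 -> 0 < t * y t * (t * (y t - z t))).
Proof.
  intros Ht. assert (Hn1 := INR_n_ge1 n Hn).
  assert (Ha := rz_le_n n beta s z HNO Hn t Ht). assert (Hp := rz_pos n beta s z HNO Hn t Ht).
  assert (Hlt := rz_lt_n n beta s z HNO Hn t Ht).
  unfold y. rewrite r_aux_y, r_aux_y_sub_z by lra. unfold aux_num.
  destruct Hcase as [HA | [HB | HC]].
  - assert (gamma * rz z t - (2 * gamma * INR n + IZR m) / 2 < 0) by nra.
    assert ((gamma - 1) * rz z t - (2 * gamma * INR n + IZR m) / 2 < 0) by nra.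
    repeat split; intros; nra.
  - rewrite HB.
    assert (gamma * rz z t - (2 * gamma * INR n + 0) / 2 < 0) by nra.
    assert ((gamma - 1) * rz z t - (2 * gamma * INR n + 0) / 2 < 0) by nra.
    repeat split; intros; nra.
  - assert (0 < gamma * rz z t - (2 * gamma * INR n + IZR m) / 2) by nra.
    assert (0 <= (gamma - 1) * rz z t - (2 * gamma * INR n + IZR m) / 2) by nra.
    repeat split; intros; nra.
Qed.

Lemma aux_y_neq0 t : 0 < t -> y t <> 0.
Proof. intros Ht H0. destruct (r_aux_y_sign t Ht) as [H _]. rewrite H0, Rmult_0_r in H. lra. Qed.

Lemma aux_xy_eq t : 0 < t -> (y t - z t) * y t = t * y t * (t * (y t - z t)) / (t * t).
Proof. intros Ht. field. lra. Qed.

Lemma aux_xy_nonneg t : 0 < t -> 0 <= (y t - z t) * y t.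
Proof.
  intros Ht. rewrite aux_xy_eq by lra.
  apply Rdiv_le_0_compat; [apply r_aux_y_sign, Ht | nra].
Qed.

Lemma aux_xy_pos_m0 t : IZR m = 0 -> 0 < t -> 0 < (y t - z t) * y t.
Proof.
  intros Hm Ht. rewrite aux_xy_eq by lra.
  apply Rdiv_lt_0_compat; [apply r_aux_y_sign; auto | nra].
Qed.

(* Only for [gamma = 1, m = -2n] does [t y = a] decay; it does so no faster than [e^(-3t/2)]. *)
Lemma r_aux_y_lower_at_infty :
  exists kap th Ry, 0 < kap /\ 0 <= th < 2 * sqrt gamma /\ 0 < Ry /\
    forall t, Ry <= t -> kap * exp (- th * t) <= Rabs (t * y t).
Proof.
  assert (Hn1 := INR_n_ge1 n Hn).
  assert (Hsg : 0 < sqrt gamma) by (apply sqrt_lt_R0; lra).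
  assert (Hb := rz_le_n n beta s z HNO Hn). assert (Hp := rz_pos n beta s z HNO Hn).
  unfold y. destruct Hcase as [HA | [HB | HC]].
  - exists (1/2), 0, 1. repeat split; try lra.
    intros t Ht. rewrite r_aux_y by lra. unfold aux_num. specialize (Hb t ltac:(lra)).
    rewrite Ropp_0, Rmult_0_l, exp_0, Rabs_left by nra. nra.
  - destruct (rz_small_at_infty n beta s z HNO (INR n / 2) ltac:(lra)) as [R1 [HR1 HR1']].
    exists (gamma * INR n / 2), 0, R1. repeat split; try lra; [nra |].
    intros t Ht. rewrite r_aux_y by lra. unfold aux_num. specialize (HR1' t Ht). apply Rabs_def2 in HR1'.
    rewrite Ropp_0, Rmult_0_l, exp_0, HB, Rabs_left by nra. nra.
  - destruct (Rlt_dec (2 * gamma * INR n + IZR m) 0) as [HK|HK].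
    + exists (- (2 * gamma * INR n + IZR m) / 2), 0, 1. repeat split; try lra.
      intros t Ht. rewrite r_aux_y by lra. unfold aux_num. specialize (Hp t ltac:(lra)).
      rewrite Ropp_0, Rmult_0_l, exp_0, Rabs_right by nra. nra.
    + assert (Hg1' : gamma = 1) by nra.
      destruct (s_near1_at_infty n beta s z HNO) as [R1 [HR1 HR1']].
      destruct (rz_exp_lower_bound n beta s z HNO Hn (3/2) R1 ltac:(lra) HR1) as [c0 [Hc0 Hlow]].
      { intros r Hr. specialize (HR1' r Hr). nra. }
      exists (gamma * c0), (3/2), R1. rewrite Hg1', sqrt_1. repeat split; try lra.
      intros t Ht. rewrite r_aux_y by lra. unfold aux_num. specialize (Hlow t Ht).
          specialize (Hp t ltac:(lra)).
      rewrite Hg1' in *. replace (2 * 1 * INR n + IZR m) with 0 by nra.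
      rewrite Rabs_right by lra. lra.
Qed.

End Signs.

Section NearZero.

Variables (n : nat) (m : Z) (beta gamma : R) (s z : R -> R).
Hypotheses (HNO : NO_profile n beta s z) (Hg : 0 < gamma).

Let y := aux_y gamma n m z.

Lemma r_aux_y_lower_near0 : IZR m <> 0 ->
  exists d, 0 < d /\ forall t, 0 < t < d -> 1 / 4 <= Rabs (t * y t).
Proof.
  intros Hm.
  assert (Hm1 : 1 <= Rabs (IZR m)).
  { rewrite <- abs_IZR. apply IZR_le.
    destruct (Z.eq_dec m 0) as [->|]; [exfalso; apply Hm; auto | lia]. }
  destruct (rz_sub_n_near0 n beta s z HNO) as [C [d [Hd H0]]].
  assert (HC : 0 <= Rabs C) by apply Rabs_pos.
  set (d' := Rmin d (Rmin 1 (/ (4 * gamma * (Rabs C + 1))))).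
  assert (Hd' : 0 < d' /\ d' <= d /\ d' <= 1 /\ d' <= / (4 * gamma * (Rabs C + 1))).
  { split.
    - unfold d'. repeat apply Rmin_glb_lt; try lra. apply Rinv_0_lt_compat. nra.
    - apply Rmin3_le. }
  exists d'. split; [lra|]. intros t Ht.
  unfold y. rewrite r_aux_y by lra. unfold aux_num.
  specialize (H0 t ltac:(lra)).
  assert (HCt : gamma * (C * t ^ 2) <= 1 / 4).
  { assert (C * t ^ 2 <= (Rabs C + 1) * t).
    { assert (C <= Rabs C) by apply Rle_abs.
        assert (0 <= C * t ^ 2 <= Rabs C * t ^ 2 \/ C * t ^ 2 < 0) by nra.
      assert (t ^ 2 <= t) by (simpl; nra). nra. }
    assert (t * (4 * gamma * (Rabs C + 1)) <= 1).
    { destruct Hd' as [_ [_ [_ H4]]]. apply (Rmult_le_compat_r (4 * gamma * (Rabs C + 1))) in H4; [|nra].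
      rewrite Rinv_l in H4 by nra. nra. }
    nra. }
  replace (gamma * rz z t - (2 * gamma * INR n + IZR m) / 2)
    with (- (IZR m / 2 - gamma * (rz z t - INR n))) by field.
  assert (Habs : Rabs (gamma * (rz z t - INR n)) <= gamma * (C * t ^ 2)).
  { rewrite Rabs_mult, Rabs_pos_eq by lra. apply Rmult_le_compat_l; lra. }
  assert (Rabs (IZR m / 2) = Rabs (IZR m) / 2)
    by (rewrite Rabs_div, (Rabs_pos_eq 2) by lra; reflexivity).
  assert (Hrt := Rabs_triang_inv (IZR m / 2) (gamma * (rz z t - INR n))).
  rewrite Rabs_Ropp. lra.
Qed.

Hypothesis Hn : (1 <= n)%nat.

Lemma r_aux_y_sq_near0 : IZR m = 0 ->
  exists rho Cy d, 0 < rho /\ 0 < Cy /\ 0 < d /\ forall t, 0 < t < d ->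
    rho * t ^ 2 <= Rabs (t * y t) /\ Rabs (t * y t) <= Cy * t ^ 2.
Proof.
  intros Hm.
  destruct (n_sub_rz_ge_sq n beta s z HNO Hn) as [c [d [Hc [Hd Hcd]]]].
  destruct (rz_sub_n_near0 n beta s z HNO) as [C [d2 [Hd2 H0]]].
  destruct (near0_and _ _ (ex_intro _ d (conj Hd Hcd)) (ex_intro _ d2 (conj Hd2 H0))) as [d' [Hd' H]].
  exists (gamma * c), (gamma * (Rabs C + 1)), d'.
  assert (HC : 0 <= Rabs C) by apply Rabs_pos.
  split; [nra |]. split; [nra |]. split; [lra |]. intros t Ht.
  destruct (H t Ht) as [Hct Hzt]. assert (0 < t) by apply Ht.
  unfold y. rewrite r_aux_y by lra. unfold aux_num. rewrite Hm.
  replace (gamma * rz z t - (2 * gamma * INR n + 0) / 2) with (gamma * (rz z t - INR n)) by field.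
  rewrite Rabs_mult, (Rabs_pos_eq gamma) by lra. split.
  - assert (0 <= t ^ 2) by apply pow2_ge_0.
    rewrite Rabs_left1 by nra. nra.
  - assert (C <= Rabs C) by apply Rle_abs.
    assert (0 <= t ^ 2) by apply pow2_ge_0.
    rewrite Rmult_assoc. apply Rmult_le_compat_l; [lra | nra].
Qed.

End NearZero.

(** * Vanishing of the W field *)

Section Contradiction.

Variables (c : R) (n : nat) (m : Z) (beta gamma : R) (s z u v : R -> R).
Hypotheses (Hc : c = 0 \/ c = 1) (Hn : (1 <= n)%nat) (Hg : 0 < gamma) (Hg1 : gamma <= 1)
  (HNO : NO_profile n beta s z) (Hu : C1_pos u) (Hv : C2_pos v)
  (HW : W_eqs c gamma (aux_y gamma n m z) s u v)
  (Hcase : 1 <= IZR m \/ IZR m = 0 \/ IZR m <= -2 * INR n).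

Let y := aux_y gamma n m z.
Let F := W_flux c gamma u v y s.
Let Fd t := W_flux_deriv c gamma t (u t) (v t) (y t) (s t) (z t).

Lemma c_range : 0 <= c <= 1.
Proof. destruct Hc as [-> | ->]; lra. Qed.

Lemma is_derive_F t : 0 < t -> is_derive F t (Fd t).
Proof.
  intros Ht. assert (Hz := NO_z_C2 n beta s z HNO).
  apply is_derive_W_flux; auto.
  - intros w Hw. destruct (Hv w Hw) as [Hv1 Hv2]. destruct (aux_y_C2 gamma n m z Hz w Hw) as [Hy1 Hy2].
    destruct (HW w Hw) as [_ E2].
    repeat split; auto. apply (aux_y_neq0 n m beta gamma s z Hn HNO Hg Hg1 Hcase w Hw).
  - apply (HW t Ht).
  - apply (aux_y_ode gamma n m z Hz beta s t HNO Ht).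
Qed.

Lemma F_incr t1 t2 : 0 < t1 <= t2 -> F t1 <= F t2.
Proof.
  intros Ht. assert (Hc01 := c_range).
  apply (incr_of_is_derive_nonneg F Fd); [lra | intros; apply is_derive_F; lra |].
  intros t Htt. apply W_flux_deriv_nonneg; try lra.
  - apply (aux_y_neq0 n m beta gamma s z Hn HNO Hg Hg1 Hcase t). lra.
  - apply (aux_xy_nonneg n m beta gamma s z Hn HNO Hg Hg1 Hcase t). lra.
Qed.

Hypotheses (Hdu : decays_W gamma u) (Hdv : decays_W gamma v).

Lemma F_small_at_infty e : 0 < e -> exists R0, 0 < R0 /\ forall t, R0 <= t -> Rabs (F t) < e.
Proof.
  destruct (s_near1_at_infty n beta s z HNO) as [Rs [HRs HRs']].
  destruct (r_aux_y_lower_at_infty n m beta gamma s z Hn HNO Hg Hg1 Hcase)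
    as [kap [th [Ry [Hkap [Hth [HRy HRy']]]]]].
  apply (W_flux_small_at_infty c gamma u v y s Rs Ry kap th c_range Hg Hkap Hth Hdu Hdv); auto.
  intros t Ht. specialize (HRs' t Ht). rewrite Rabs_pos_eq; lra.
Qed.

Lemma F_nonpos t : 0 < t -> F t <= 0.
Proof. apply nondecr_small_at_infty_nonpos; [apply F_incr | apply F_small_at_infty]. Qed.

Variables (k u0 v0 : R).
Hypotheses (Hk : -(1/2) < k) (Hau : asym0_pow u u0 k) (Hav : asym0_pow v v0 k).

Lemma F_bound_near0_coef_nonneg rho : 0 < rho -> 0 <= 32 * c * Rabs u0 * Rabs v0 * v0 ^ 2 / rho.
Proof.
  intros Hrho. assert (Hc01 := c_range).
  assert (0 <= Rabs u0) by apply Rabs_pos. assert (0 <= Rabs v0) by apply Rabs_pos.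
  assert (0 <= v0 ^ 2) by apply pow2_ge_0.
  apply Rdiv_le_0_compat; [| lra].
  apply Rmult_le_pos; [apply Rmult_le_pos; [apply Rmult_le_pos |] |]; lra.
Qed.

Lemma F_bound_near0 rho j : 0 < rho ->
  (exists d, 0 < d /\ forall t, 0 < t < d -> rho * Rpower t j <= Rabs (t * y t)) ->
  exists c1 d, 0 <= c1 /\ 0 < d /\ forall t, 0 < t < d ->
    Rabs (F t) <= c1 * Rpower t (2 - j + 2 * k + 2 * INR n)
                  + (32 * c * Rabs u0 * Rabs v0 * v0 ^ 2 / rho) * Rpower t (2 - j + 4 * k).
Proof.
  intros Hrho Hy.
  destruct (s_pow_bound_near0 n beta s z HNO) as [Cs Hs].
  destruct (near0_and _ _ (asym0_pow_bounds u u0 k Hau)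
             (near0_and _ _ (asym0_pow_bounds v v0 k Hav) (near0_and _ _ Hs Hy))) as [d [Hd Hall]].
  exists (4 * Rabs u0 * Rabs v0 * (gamma / 2) * Cs ^ 2 / rho), d.
  split; [| split; [exact Hd |]].
  - apply Rdiv_le_0_compat; [| lra].
    assert (0 <= Rabs u0) by apply Rabs_pos. assert (0 <= Rabs v0) by apply Rabs_pos.
    assert (0 <= Cs ^ 2) by apply pow2_ge_0.
    apply Rmult_le_pos; [| auto]. apply Rmult_le_pos; [| lra]. apply Rmult_le_pos; lra.
  - apply (W_flux_bound_near0 c gamma u v y s n k u0 v0 Cs rho j d); try apply c_range; auto;
      intros t Ht; destruct (Hall t Ht) as [[? ?] [[? ?] [? ?]]]; auto.
Qed.

Lemma F_small_near0_m_neq0 : IZR m <> 0 ->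
  forall e, 0 < e -> exists d, 0 < d /\ forall t, 0 < t < d -> Rabs (F t) < e.
Proof.
  intros Hm e He. assert (Hn1 := INR_n_ge1 n Hn). assert (Hc01 := c_range).
  destruct (F_bound_near0 (1/4) 0 ltac:(lra)) as [c1 [d0 [Hc1 [Hd0 Hbd]]]].
  { destruct (r_aux_y_lower_near0 n m beta gamma s z HNO Hg Hm) as [d [Hd H]].
    exists d. split; auto. intros t Ht. rewrite Rpower_O by lra. specialize (H t Ht). fold y in H. lra. }
  assert (Hc2 := F_bound_near0_coef_nonneg (1/4) ltac:(lra)).
  destruct (near0_and _ _ (Rpower_sum_small_near0 _ _ (2 - 0 + 2 * k + 2 * INR n) (2 - 0 + 4 * k)
    Hc1 Hc2 ltac:(lra) ltac:(left; lra) e He) (ex_intro _ d0 (conj Hd0 Hbd))) as [d [Hd Hall]].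
  exists d. split; auto. intros t Ht. destruct (Hall t Ht). lra.
Qed.

(* For [c = 1], [m = 0], [k <= 0], the [F]-bound only gives [O(t^(4k))], but then the cubic
   terms force [F' >= kap t^(6k-1)], which is too large to integrate. *)
Lemma F_m0_singular_false : IZR m = 0 -> c = 1 -> k <= 0 -> u0 <> 0 -> v0 <> 0 -> False.
Proof.
  intros Hm Hc_one Hk0 Hu0 Hv0. assert (Hn1 := INR_n_ge1 n Hn).
  destruct (r_aux_y_sq_near0 n m beta gamma s z HNO Hg Hn Hm) as [rho [Cy [d1 [Hrho [HCy [Hd1 Hy1]]]]]].
  destruct (F_bound_near0 rho 2 Hrho) as [c1 [d0 [Hc1 [Hd0 Hbd]]]].
  { exists d1. split; [lra |]. intros t Ht. rewrite Rpower_2 by lra. apply (Hy1 t Ht). }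
  set (c2 := 32 * c * Rabs u0 * Rabs v0 * v0 ^ 2 / rho) in *.
  assert (Hc2 := F_bound_near0_coef_nonneg rho Hrho). fold c2 in Hc2.
  destruct (near0_and _ _ (asym0_pow_bounds u u0 k Hau)
    (near0_and _ _ (asym0_pow_bounds v v0 k Hav) (near0_and _ _ (ex_intro _ d0 (conj Hd0 Hbd))
      (ex_intro _ d1 (conj Hd1 Hy1))))) as [d [Hd Hall]].
  assert (Hd' : 0 < Rmin d 1 <= 1) by (split; [apply Rmin_glb_lt; lra | apply Rmin_r]).
  assert (Hdd : forall t, 0 < t < Rmin d 1 -> 0 < t < d /\ t < 1)
    by (intros t Ht; assert (Rmin d 1 <= d) by apply Rmin_l;
        assert (Rmin d 1 <= 1) by apply Rmin_r; lra).
  apply (log_barrier_false F Fd k (u0 ^ 2 * v0 ^ 4 / (16 * Cy ^ 2)) (c1 + c2) (Rmin d 1)); auto; try lra.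
  - apply Rdiv_lt_0_compat; [apply Rmult_lt_0_compat | nra].
    + apply pow2_gt_0, Hu0.
    + replace (v0 ^ 4) with ((v0 ^ 2) ^ 2) by ring. apply pow2_gt_0, pow_nonzero, Hv0.
  - intros t Ht. destruct (Hdd t Ht) as [Htd Ht1]. destruct (Hall t Htd) as [_ [_ [Hb _]]].
    replace (2 - 2 + 4 * k) with (4 * k) in Hb by ring.
    assert (Rpower t (2 - 2 + 2 * k + 2 * INR n) <= Rpower t (4 * k)) by (apply Rpower_le_of_le1; lra).
    assert (c1 * Rpower t (2 - 2 + 2 * k + 2 * INR n) <= c1 * Rpower t (4 * k))
      by (apply Rmult_le_compat_l; lra).
    lra.
  - intros t Ht. apply F_nonpos. lra.
  - intros t Ht. apply is_derive_F. lra.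
  - intros t Ht. destruct (Hdd t Ht) as [Htd Ht1].
    destruct (Hall t Htd) as [[_ Hul] [[_ Hvl] [_ [_ Hyu]]]].
    assert (Hy0 : y t <> 0) by (apply (aux_y_neq0 n m beta gamma s z Hn HNO Hg Hg1 Hcase); lra).
    eapply Rle_trans; [apply (quartic_ratio_lower t k (u t) (v t) (y t)); eauto; lra |].
    unfold Fd. rewrite Hc_one. apply W_flux_deriv_ge; auto; try lra.
    apply (aux_xy_nonneg n m beta gamma s z Hn HNO Hg Hg1 Hcase). lra.
Qed.

Lemma F_small_near0_m0 : IZR m = 0 ->
  forall e, 0 < e -> exists d, 0 < d /\ forall t, 0 < t < d -> Rabs (F t) < e.
Proof.
  intros Hm e He. assert (Hn1 := INR_n_ge1 n Hn). assert (Hc01 := c_range).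
  destruct (r_aux_y_sq_near0 n m beta gamma s z HNO Hg Hn Hm) as [rho [Cy [d1 [Hrho [HCy [Hd1 Hy1]]]]]].
  destruct (F_bound_near0 rho 2 Hrho) as [c1 [d0 [Hc1 [Hd0 Hbd]]]].
  { exists d1. split; [lra |]. intros t Ht. rewrite Rpower_2 by lra. apply (Hy1 t Ht). }
  set (c2 := 32 * c * Rabs u0 * Rabs v0 * v0 ^ 2 / rho) in *.
  assert (Hc2 := F_bound_near0_coef_nonneg rho Hrho). fold c2 in Hc2.
  destruct (Rlt_dec 0 (2 - 2 + 4 * k)) as [Hk4 | Hk4]; [| destruct (Req_dec c2 0) as [Hc20 | Hc20]].
  3: { exfalso. apply (F_m0_singular_false Hm); try lra.
       - destruct Hc as [-> | ->]; [exfalso; apply Hc20; unfold c2; field; lra | reflexivity].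
       - intros ->. apply Hc20. unfold c2. rewrite Rabs_R0. field. lra.
       - intros ->. apply Hc20. unfold c2. rewrite Rabs_R0. field. lra. }
  all: destruct (near0_and _ _ (Rpower_sum_small_near0 c1 c2 (2 - 2 + 2 * k + 2 * INR n) (2 - 2 + 4 * k)
         Hc1 Hc2 ltac:(lra) ltac:(auto) e He) (ex_intro _ d0 (conj Hd0 Hbd))) as [d [Hd Hall]].
  all: exists d; split; auto; intros t Ht; destruct (Hall t Ht); lra.
Qed.

Lemma F_zero t : 0 < t -> F t = 0.
Proof.
  apply nondecr_small_at_ends_zero; [apply F_incr | apply F_small_at_infty |].
  destruct (Req_dec (IZR m) 0); [apply F_small_near0_m0 | apply F_small_near0_m_neq0]; auto.
Qed.

Lemma Fd_zero t : 0 < t -> Fd t = 0.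
Proof.
  intros Ht.
  assert (H0 : is_derive F t 0).
  { apply (is_derive_locally_const F t 0 (t / 2)); [lra |].
    intros x Hx. apply Rabs_def2 in Hx. apply F_zero. lra. }
  rewrite <- (is_derive_unique F t 0 H0). symmetry. apply is_derive_unique, is_derive_F, Ht.
Qed.

Lemma u_zero t : 0 < t -> u t = 0.
Proof.
  apply (continuous_factor_zero u s).
  - intros w Hw. apply continuity_pt_ex_derive, Hu, Hw.
  - apply (s_not_zero_on_interval n beta s z HNO).
  - intros w Hw. refine (proj1 (W_flux_deriv_eq0 c gamma w (u w) (v w) (y w) (s w) (z w) Hw Hg _ _ _ _)).
    + apply c_range.
    + apply (aux_y_neq0 n m beta gamma s z Hn HNO Hg Hg1 Hcase w Hw).
    + apply (aux_xy_nonneg n m beta gamma s z Hn HNO Hg Hg1 Hcase w Hw).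
    + apply Fd_zero, Hw.
Qed.

Lemma v_prop_aux_y t : 0 < t -> v t = v 1 / y 1 * y t.
Proof.
  apply wronskian_zero_proportional. intros w Hw.
  destruct (Hv w Hw) as [Hv1 _].
  destruct (aux_y_C2 gamma n m z (NO_z_C2 n beta s z HNO) w Hw) as [Hy1 _].
  destruct (HW w Hw) as [_ E2]. rewrite (u_zero w Hw) in E2.
  repeat split; auto.
  - apply (aux_y_neq0 n m beta gamma s z Hn HNO Hg Hg1 Hcase w Hw).
  - fold y in E2. lra.
Qed.

(* At a point where [s > 0], [F' = 0] forces [v^2 x y = 0] with [x y > 0]. *)
Lemma v_prop_const_zero_m0 : IZR m = 0 -> v 1 / y 1 = 0.
Proof.
  intros Hm0.
  destruct (s_near1_at_infty n beta s z HNO) as [Rs [HRs HRs']].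
  specialize (HRs' Rs (Rle_refl _)).
  assert (Hy0 := aux_y_neq0 n m beta gamma s z Hn HNO Hg Hg1 Hcase Rs HRs).
  destruct (W_flux_deriv_eq0 c gamma Rs (u Rs) (v Rs) (y Rs) (s Rs) (z Rs) HRs Hg) as [_ Hz0];
    [apply c_range | exact Hy0
    | apply (aux_xy_nonneg n m beta gamma s z Hn HNO Hg Hg1 Hcase Rs HRs) | apply Fd_zero, HRs |].
  assert (Hxy := aux_xy_pos_m0 n m beta gamma s z Hn HNO Hg Hg1 Hcase Rs Hm0 HRs). fold y in Hxy.
  assert (Hs0 : 0 < s Rs ^ 2) by (apply pow_lt; lra).
  assert (Hv0 : v Rs = 0).
  { apply pow2_eq_0. apply Rmult_integral in Hz0. destruct Hz0 as [Hz0 | Hz0]; [| lra].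
    apply Rmult_integral in Hz0. destruct Hz0 as [Hz0 | Hz0]; [lra | auto]. }
  rewrite (v_prop_aux_y Rs HRs) in Hv0.
  apply Rmult_integral in Hv0. destruct Hv0 as [| Hy]; [auto | contradiction].
Qed.

(* [|t y| >= 1/4] near [0] while [t v = O(t^(k+1))] with [k + 1 > 0]. *)
Lemma v_prop_const_zero_m_neq0 : IZR m <> 0 -> v 1 / y 1 = 0.
Proof.
  intros Hm0. set (C := v 1 / y 1).
  destruct (Req_dec C 0) as [| HC]; auto. exfalso.
  assert (HCa : 0 < Rabs C) by (apply Rabs_pos_lt; auto).
  assert (Hv0 : 0 <= Rabs v0) by apply Rabs_pos.
  destruct (near0_and _ _ (r_aux_y_lower_near0 n m beta gamma s z HNO Hg Hm0)
    (near0_and _ _ (asym0_pow_bounds v v0 k Hav)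
      (Rpower_small_near0 (k + 1) ltac:(lra) (Rabs C / (8 * (Rabs v0 + 1)))
        ltac:(apply Rdiv_lt_0_compat; lra)))) as [d [Hd Hall]].
  destruct (Hall (d / 2) ltac:(lra)) as [Hy1 [[Hv1 _] Hsmall]]. set (t := d / 2) in *.
  assert (Ht : 0 < t) by (unfold t; lra).
  assert (Htv : t * v t = C * (t * y t)) by (rewrite (v_prop_aux_y t Ht); fold C; ring).
  assert (Hl : Rabs C * (1 / 4) <= Rabs (t * v t))
    by (rewrite Htv, Rabs_mult; apply Rmult_le_compat_l; [apply Rabs_pos | exact Hy1]).
  assert (Hr : Rabs (t * v t) <= 2 * Rabs v0 * Rpower t (k + 1)).
  { rewrite Rabs_mult, Rabs_pos_eq, Rpower_plus, Rpower_1 by lra.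
    replace (2 * Rabs v0 * (Rpower t k * t)) with (t * (2 * Rabs v0 * Rpower t k)) by ring.
    apply Rmult_le_compat_l; lra. }
  assert (0 < Rpower t (k + 1)) by apply Rpower_pos.
  apply (Rmult_lt_compat_l (2 * (Rabs v0 + 1))) in Hsmall; [| lra].
  replace (2 * (Rabs v0 + 1) * (Rabs C / (8 * (Rabs v0 + 1)))) with (Rabs C / 4) in Hsmall
    by (field; lra).
  nra.
Qed.

Lemma u_v_zero t : 0 < t -> u t = 0 /\ v t = 0.
Proof.
  intros Ht. split; [apply u_zero, Ht |].
  rewrite (v_prop_aux_y t Ht).
  destruct (Req_dec (IZR m) 0);
    [rewrite v_prop_const_zero_m0 | rewrite v_prop_const_zero_m_neq0]; auto; ring.
Qed.


End Contradiction.

Lemma Z_between_or_outside (n : nat) (m : Z) :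
  (- 2 * Z.of_nat n < m < 0)%Z \/ (1 <= IZR m \/ IZR m = 0 \/ IZR m <= -2 * INR n).
Proof.
  rewrite INR_IZR_INZ. replace (-2 * IZR (Z.of_nat n)) with (IZR (-2 * Z.of_nat n))
      by (rewrite mult_IZR; reflexivity).
  destruct (Z_lt_le_dec (-2 * Z.of_nat n) m); destruct (Z_lt_le_dec m 0).
  - left. lia.
  - right. destruct (Z.eq_dec m 0) as [-> | Hm]; [right; left; reflexivity | left; apply IZR_le; lia].
  - right. right. right. apply IZR_le. lia.
  - right. right. right. apply IZR_le. lia.
Qed.

Theorem theorem2 (n : nat) (m : Z) (beta gamma : R) (s z u v : R -> R) :
  (1 <= n)%nat -> 0 < beta -> 0 < gamma -> gamma <= 1 ->
  NO_profile n beta s z ->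
  C1_pos u -> C2_pos v ->
  ~ (forall r, 0 < r -> u r = 0 /\ v r = 0) ->
  (W_eqs 1 gamma (aux_y gamma n m z) s u v \/
   W_eqs 0 gamma (aux_y gamma n m z) s u v) ->
  (exists k u0 v0 : R, -(1/2) < k /\ asym0_pow u u0 k /\ asym0_pow v v0 k) ->
  decays_W gamma u -> decays_W gamma v ->
  (- 2 * Z.of_nat n < m < 0)%Z.
Proof.
  intros Hn _ Hg Hg1 HNO Hu Hv Hnt HW [k [u0 [v0 [Hk [Hau Hav]]]]] Hdu Hdv.
  destruct (Z_between_or_outside n m) as [| Hcase]; [assumption | exfalso].
  apply Hnt. intros r Hr.
  destruct HW as [HW | HW];
    [apply (u_v_zero 1 n m beta gamma s z u v) with (k := k) (u0 := u0) (v0 := v0)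
    | apply (u_v_zero 0 n m beta gamma s z u v) with (k := k) (u0 := u0) (v0 := v0)]; auto.
Qed.
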